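(* Assume $0<\zeta_3<\zeta_2<\zeta_1$ and let $$\phi(x)=\frac{2(\zeta_1+\zeta_3)(\zeta_2+\zeta_3)}{(\zeta_1+\zeta_3)-(\zeta_1-\zeta_2)\mathrm{sn}^2(\nu x,k)}-\zeta_1-\zeta_2-\zeta_3,\quad \nu=\sqrt{\zeta_1^2-\zeta_3^2},\ k=\sqrt{\frac{\zeta_1^2-\zeta_2^2}{\zeta_1^2-\zeta_3^2}},$$ viewed as a meromorphic function of $z=\nu x\in\mathbb{C}$. Counting with multiplicity and modulo the periods $2K$, $2iK'$, there exist exactly two simple poles of $\phi$ in $[-K,K]\times[-iK',iK']$, at $\pm(iK'+\alpha)$ with $\alpha\in(0,K)$ given by $$\mathrm{sn}(\alpha,k)=\sqrt{\frac{\zeta_1-\zeta_3}{\zeta_1+\zeta_2}},$$ and two simple zeros of $\phi$ in $[-K,K]\times[-iK',iK']$ at $\pm\beta$, where: $\beta\in(0,K)$ is real for $\zeta_1>\zeta_2+\zeta_3$ and given by $$\mathrm{sn}(\beta,k)=\sqrt{\frac{(\zeta_1+\zeta_3)(\zeta_1-\zeta_2-\zeta_3)}{(\zeta_1-\zeta_2)(\zeta_1+\zeta_2+\zeta_3)}};$$ $\beta\in i(0,K')$ is purely imaginary for $\zeta_1<\zeta_2+\zeta_3$ and given by $$\mathrm{sn}(-i\beta,k')=\sqrt{\frac{(\zeta_1+\zeta_3)(\zeta_2+\zeta_3-\zeta_1)}{(\zeta_2+\zeta_3)(\zeta_1-\zeta_2+\zeta_3)}};$$ and $\beta=0$ for $\zeta_1=\zeta_2+\zeta_3$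 (in which case there is only one double zero).
   Context: $K=K(k)$ is the complete elliptic integral of the first kind, $k'=\sqrt{1-k^2}$, $K'=K(k')$, and $\mathrm{sn}(\cdot,k)$ is the Jacobi elliptic sine with modulus $k$. $[-K,K]\times[-iK',iK']$ denotes the rectangle $\{a+ib: a\in[-K,K], b\in[-K',K']\}$. *)

From Stdlib Require Import Reals ClassicalEpsilon ZArith.
From Coquelicot Require Import Coquelicot.
Open Scope R_scope.

Definition ellF (phi k : R) : R :=
  RInt (fun t => / sqrt (1 - k ^ 2 * sin t ^ 2)) 0 phi.

Definition ellK (k : R) : R := ellF (PI / 2) k.

Definition cmod (k : R) : R := sqrt (1 - k ^ 2).

(** Jacobi amplitude: the inverse function of phi |-> F(phi,k)
    (a strictly increasing bijection R -> R for 0 <= k < 1). *)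
Definition am (u k : R) : R :=
  epsilon (inhabits 0) (fun phi => ellF phi k = u).

Definition sn (u k : R) : R := sin (am u k).
Definition cn (u k : R) : R := cos (am u k).
Definition dn (u k : R) : R := sqrt (1 - k ^ 2 * sn u k ^ 2).

(** Jacobi sn at a complex argument x + i y, via the addition theorem and
    Jacobi's imaginary transformation (the standard formula):
    sn(x+iy,k) = (s d1 + i c d s1 c1) / (c1^2 + k^2 s^2 s1^2),
    s,c,d = sn,cn,dn(x,k);  s1,c1,d1 = sn,cn,dn(y,k').
    (At the poles of sn the denominator vanishes and the value is junk;
     all statements below only look at limits in punctured neighbourhoods.) *)
Definition snC (z : C) (k : R) : C :=
  let x := Re z in let y := Im z in let k' := cmod k in
  let s := sn x k in let c := cn x k in let d := dn x k in
  let s1 := sn y k' in let c1 := cn y k' in let d1 := dn y k' in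
  Cdiv (s * d1, c * d * s1 * c1) (RtoC (c1 ^ 2 + k ^ 2 * s ^ 2 * s1 ^ 2)).

Fixpoint Cpow_nat (z : C) (n : nat) : C :=
  match n with O => RtoC 1 | S n => Cmult z (Cpow_nat z n) end.
Definition Cpow_Z (z : C) (m : Z) : C :=
  match m with
  | Z0 => RtoC 1
  | Zpos p => Cpow_nat z (Pos.to_nat p)
  | Zneg p => Cinv (Cpow_nat z (Pos.to_nat p))
  end.

(** f has order m at z0 (m > 0: zero of multiplicity m, m < 0: pole of
    order -m, m = 0: finite nonzero limit), i.e. (z - z0)^(-m) f(z) tends
    to a finite nonzero limit as z -> z0, z <> z0. *)
Definition order_at (f : C -> C) (z0 : C) (m : Z) : Prop :=
  exists L : C, L <> RtoC 0 /\
    filterlim (fun z => Cmult (Cpow_Z (Cminus z z0) (- m)) (f z))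
              (locally' z0) (locally L).

Definition lat_eq (K K' : R) (z w : C) : Prop :=
  exists m n : Z, Cminus z w = (2 * IZR m * K, 2 * IZR n * K').

Definition in_rect (K K' : R) (z : C) : Prop :=
  -K <= Re z <= K /\ -K' <= Im z <= K'.

From Stdlib Require Import Reals ZArith Lra Lia Psatz Nsatz ClassicalEpsilon.
From Coquelicot Require Import Coquelicot.
Open Scope R_scope.

(* Write [w = sn z] and [phi = N / (A - c w^2) - S] with [N = 2 (z1+z3)(z2+z3)],
   [A = z1+z3], [c = z1-z2], [S = z1+z2+z3].  At the poles of [sn], [phi] tends to
   [-S]; elsewhere [phi] has a pole exactly where [w^2 = A/c] and a zero exactly
   where [w^2 = (SA - N)/(Sc)], simple because [sn' = cn dn] does not vanish there,
   and double at [w = 0].  On the period rectangle [sn^2] is real only on the lines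
   [x = +-K] (values in [[1, 1/k^2]]), [y = 0] (values [sn^2 x] in [[0, 1]]),
   [y = +-K'] (values [1/(k^2 sn^2 x) >= 1/k^2]) and [x = 0] (values
   [- sn^2(y,k') / cn^2(y,k') <= 0]).  As [A/c > 1/k^2], the poles lie on [y = +-K'];
   as [(SA - N)/(Sc) < 1] has the sign of [z1 - z2 - z3], the zeros lie on [y = 0],
   on [x = 0], or at the origin.  Holomorphy of [sn] is checked on its closed form
   in terms of real Jacobi functions through the Cauchy-Riemann equations. *)

(** * Jacobi functions of a real variable *)

Section RealJacobi.

Variable m : R.
Hypothesis Hm : m ^ 2 < 1.

Definition ellF_integrand (t : R) : R := / sqrt (1 - m ^ 2 * sin t ^ 2).

Lemma ellF_radicand_pos (t : R) : 0 < 1 - m ^ 2 * sin t ^ 2.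
Proof.
  assert (0 <= sin t ^ 2 <= 1).
  { pose proof (sin2 t). pose proof (cos2 t). unfold Rsqr in *. split; nra. }
  assert (0 <= m ^ 2) by nra.
  nra.
Qed.

Lemma ellF_integrand_ge1 (t : R) : 1 <= ellF_integrand t.
Proof.
  unfold ellF_integrand. pose proof (ellF_radicand_pos t).
  assert (0 <= m ^ 2 * sin t ^ 2) by (apply Rmult_le_pos; apply pow2_ge_0).
  assert (0 < sqrt (1 - m ^ 2 * sin t ^ 2)) by (apply sqrt_lt_R0; lra).
  assert (sqrt (1 - m ^ 2 * sin t ^ 2) <= 1).
  { rewrite <- sqrt_1 at 2. apply sqrt_le_1_alt. lra. }
  rewrite <- Rinv_1 at 1. apply Rinv_le_contravar; lra.
Qed.

Lemma ellF_integrand_even (t : R) : ellF_integrand (- t) = ellF_integrand t.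
Proof. unfold ellF_integrand. rewrite sin_neg. do 3 f_equal. ring. Qed.

Lemma continuous_ellF_integrand (t : R) : continuous ellF_integrand t.
Proof.
  apply (ex_derive_continuous (K := R_AbsRing) (V := R_NormedModule)).
  pose proof (ellF_radicand_pos t). unfold ellF_integrand. auto_derive.
  repeat split; try apply Rgt_not_eq; try apply sqrt_lt_R0; lra.
Qed.

Lemma ex_RInt_ellF_integrand (a b : R) : ex_RInt ellF_integrand a b.
Proof.
  apply (ex_RInt_continuous (V := R_CompleteNormedModule)).
  intros; apply continuous_ellF_integrand.
Qed.

Lemma is_derive_ellF (p : R) : is_derive (fun q => ellF q m) p (ellF_integrand p).
Proof.
  apply (is_derive_RInt ellF_integrand (fun b => RInt ellF_integrand 0 b) 0 p).
  - apply filter_forall. intros b.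
    apply (RInt_correct (V := R_CompleteNormedModule)), ex_RInt_ellF_integrand.
  - apply continuous_ellF_integrand.
Qed.

Lemma continuous_ellF : continuity (fun q => ellF q m).
Proof.
  intros x. apply continuity_pt_filterlim.
  apply (ex_derive_continuous (K := R_AbsRing) (V := R_NormedModule) (fun q => ellF q m)).
  eexists. apply is_derive_ellF.
Qed.

Lemma ellF_0 : ellF 0 m = 0.
Proof. apply (RInt_point (V := R_CompleteNormedModule)). Qed.

(* The integrand is at least [1]. *)
Lemma ellF_sub_ge (a b : R) : a <= b -> b - a <= ellF b m - ellF a m.
Proof.
  intros Hab. unfold ellF. fold ellF_integrand.
  assert (E : RInt ellF_integrand 0 b - RInt ellF_integrand 0 a = RInt ellF_integrand a b).
  { rewrite <- (RInt_Chasles ellF_integrand 0 a b) by apply ex_RInt_ellF_integrand.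
    unfold plus; simpl. ring. }
  rewrite E.
  assert (H : RInt (fun _ => 1) a b <= RInt ellF_integrand a b).
  { apply RInt_le; auto using ex_RInt_const, ex_RInt_ellF_integrand, ellF_integrand_ge1. }
  rewrite RInt_const in H. unfold scal in H; simpl in H. unfold mult in H; simpl in H. lra.
Qed.

Lemma ellF_lt (a b : R) : a < b -> ellF a m < ellF b m.
Proof. intros H. pose proof (ellF_sub_ge a b (Rlt_le _ _ H)). lra. Qed.

Lemma ellF_inj (a b : R) : ellF a m = ellF b m -> a = b.
Proof.
  intros E. destruct (Rtotal_order a b) as [h|[h|h]]; auto;
    [pose proof (ellF_lt a b h) | pose proof (ellF_lt b a h)]; lra.
Qed.

Lemma ellF_opp (p : R) : ellF (- p) m = - ellF p m.
Proof.
  unfold ellF. fold ellF_integrand.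
  pose proof (RInt_comp_lin (V := R_CompleteNormedModule) ellF_integrand (-1) 0 0 p) as H.
  replace (-1 * 0 + 0) with 0 in H by ring.
  replace (-1 * p + 0) with (- p) in H by ring.
  rewrite <- H by apply ex_RInt_ellF_integrand.
  rewrite (RInt_ext (V := R_CompleteNormedModule) _ (fun y => opp (ellF_integrand y))).
  - rewrite (RInt_opp (V := R_CompleteNormedModule)) by apply ex_RInt_ellF_integrand.
    reflexivity.
  - intros x _. unfold scal; simpl; unfold mult, opp; simpl.
    replace (-1 * x + 0) with (- x) by ring. rewrite ellF_integrand_even. ring.
Qed.

Lemma ellF_surj (u : R) : exists p, ellF p m = u.
Proof.
  set (a := - Rabs u - 1). set (b := Rabs u + 1).
  pose proof (Rabs_pos u). pose proof (Rle_abs u). pose proof (Rle_abs (- u)).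
  rewrite Rabs_Ropp in *.
  pose proof (ellF_sub_ge a 0 ltac:(unfold a; lra)).
  pose proof (ellF_sub_ge 0 b ltac:(unfold b; lra)).
  rewrite ellF_0 in *.
  destruct (IVT (fun q => ellF q m - u) a b) as [p [_ Hp]].
  - intros x. apply continuity_pt_minus; [apply continuous_ellF | apply continuity_pt_const].
    intros ? ?; auto.
  - unfold a, b; lra.
  - unfold a in *; lra.
  - unfold b in *; lra.
  - exists p. lra.
Qed.

Lemma ellF_am (u : R) : ellF (am u m) m = u.
Proof.
  apply (epsilon_spec (inhabits 0) (fun phi => ellF phi m = u)), ellF_surj.
Qed.

Lemma am_ellF (p : R) : am (ellF p m) m = p.
Proof. apply ellF_inj. now rewrite ellF_am. Qed.

Lemma am_0 : am 0 m = 0.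
Proof. rewrite <- ellF_0 at 1. apply am_ellF. Qed.

Lemma am_opp (u : R) : am (- u) m = - am u m.
Proof. apply ellF_inj. rewrite ellF_opp, !ellF_am. reflexivity. Qed.

Lemma am_le (u v : R) : u <= v -> am u m <= am v m.
Proof.
  intros h. destruct (Rle_dec (am u m) (am v m)) as [|h']; auto.
  pose proof (ellF_lt (am v m) (am u m) ltac:(lra)). rewrite !ellF_am in *. lra.
Qed.

Lemma am_lipschitz (u v : R) : Rabs (am u m - am v m) <= Rabs (u - v).
Proof.
  destruct (Rle_dec (am u m) (am v m)) as [h|h].
  - pose proof (ellF_sub_ge _ _ h). rewrite !ellF_am in *.
    rewrite !Rabs_left1 by lra. lra.
  - pose proof (ellF_sub_ge (am v m) (am u m) ltac:(lra)). rewrite !ellF_am in *.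
    rewrite !Rabs_right by lra. lra.
Qed.

Lemma continuous_am (u : R) : continuity_pt (fun v => am v m) u.
Proof.
  intros eps Heps. exists eps. split; auto. intros x [_ Hx].
  simpl in *. unfold R_dist in *. eapply Rle_lt_trans; [apply am_lipschitz | exact Hx].
Qed.

Lemma sn2_cn2 (u : R) : sn u m ^ 2 + cn u m ^ 2 = 1.
Proof. unfold sn, cn. pose proof (sin2_cos2 (am u m)). unfold Rsqr in *. lra. Qed.

Lemma dn_pos (u : R) : 0 < dn u m.
Proof. apply sqrt_lt_R0, ellF_radicand_pos. Qed.

Lemma dn2 (u : R) : dn u m ^ 2 = 1 - m ^ 2 * sn u m ^ 2.
Proof. apply pow2_sqrt. pose proof (ellF_radicand_pos (am u m)). unfold sn. lra. Qed.

(* [am] inverts [ellF], whose derivative at [am u] is [1 / dn u]. *)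
Lemma derivable_pt_lim_am (u : R) : derivable_pt_lim (fun v => am v m) u (dn u m).
Proof.
  assert (Hd : forall a, derivable_pt_lim (fun q => ellF q m) a (ellF_integrand a)).
  { intros a. apply is_derive_Reals, is_derive_ellF. }
  set (Prf := fun a (_ : am (u - 1) m <= a <= am (u + 1) m) =>
         exist (fun l => derivable_pt_lim (fun q => ellF q m) a l) (ellF_integrand a) (Hd a)
         : derivable_pt (fun q => ellF q m) a).
  assert (Hi : am (u - 1) m <= am u m <= am (u + 1) m) by (split; apply am_le; lra).
  pose proof (Ranalysis5.derivable_pt_lim_recip_interv (fun q => ellF q m) (fun v => am v m)
                (u - 1) (u + 1) u Prf (continuous_am u) ltac:(lra) ltac:(lra) Hi) as H.
  assert (Hder : derive_pt (fun q => ellF q m) (am u m) (Prf (am u m) Hi)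
                 = ellF_integrand (am u m)) by (apply derive_pt_eq_0, Hd).
  cbv beta in H. rewrite Hder in H.
  replace (dn u m) with (1 / ellF_integrand (am u m)).
  - apply H.
    + intros x _. apply ellF_am.
    + pose proof (ellF_integrand_ge1 (am u m)). lra.
  - unfold ellF_integrand, dn, sn. pose proof (dn_pos u) as Hp. unfold dn, sn in Hp.
    field. lra.
Qed.

Lemma derivable_pt_lim_sn (u : R) :
  derivable_pt_lim (fun v => sn v m) u (cn u m * dn u m).
Proof.
  apply (derivable_pt_lim_comp (fun v => am v m) sin);
    [apply derivable_pt_lim_am | apply derivable_pt_lim_sin].
Qed.

Lemma derivable_pt_lim_cn (u : R) :
  derivable_pt_lim (fun v => cn v m) u (- sn u m * dn u m).
Proof.
  change (- sn u m * dn u m) with (- sin (am u m) * dn u m).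
  apply (derivable_pt_lim_comp (fun v => am v m) cos);
    [apply derivable_pt_lim_am | apply derivable_pt_lim_cos].
Qed.

Lemma derivable_pt_lim_dn (u : R) :
  derivable_pt_lim (fun v => dn v m) u (- m ^ 2 * sn u m * cn u m).
Proof.
  pose proof (dn_pos u) as Hp. unfold dn in *.
  pose proof (ellF_radicand_pos (am u m)) as Hr. fold (sn u m) in Hr.
  assert (Hsq : derivable_pt_lim (fun v => 1 - m ^ 2 * sn v m ^ 2) u
                  (- (m ^ 2 * (2 * sn u m)) * (cn u m * dn u m))).
  { apply (derivable_pt_lim_comp (fun v => sn v m) (fun x => 1 - m ^ 2 * x ^ 2)).
    - apply derivable_pt_lim_sn.
    - apply is_derive_Reals. auto_derive; auto. ring. }
  pose proof (derivable_pt_lim_comp _ sqrt u _ _ Hsq (derivable_pt_lim_sqrt _ Hr)) as H.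
  unfold comp in H.
  replace (- m ^ 2 * sn u m * cn u m) with
    (/ (2 * sqrt (1 - m ^ 2 * sn u m ^ 2)) * (- (m ^ 2 * (2 * sn u m)) * (cn u m * dn u m))).
  - exact H.
  - unfold dn. field. lra.
Qed.

Lemma ellK_pos : 0 < ellK m.
Proof.
  unfold ellK. rewrite <- ellF_0. apply ellF_lt. pose proof PI_RGT_0. lra.
Qed.

Lemma am_K : am (ellK m) m = PI / 2.
Proof. apply am_ellF. Qed.

Lemma am_opp_K : am (- ellK m) m = - (PI / 2).
Proof. rewrite am_opp, am_K. reflexivity. Qed.

Lemma sn_0 : sn 0 m = 0.
Proof. unfold sn. rewrite am_0. apply sin_0. Qed.

Lemma cn_0 : cn 0 m = 1.
Proof. unfold cn. rewrite am_0. apply cos_0. Qed.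

Lemma dn_0 : dn 0 m = 1.
Proof. unfold dn. rewrite sn_0. replace (1 - m ^ 2 * 0 ^ 2) with 1 by ring. apply sqrt_1. Qed.

Lemma sn_K : sn (ellK m) m = 1.
Proof. unfold sn. rewrite am_K. apply sin_PI2. Qed.

Lemma cn_K : cn (ellK m) m = 0.
Proof. unfold cn. rewrite am_K. apply cos_PI2. Qed.

Lemma sn_opp_K : sn (- ellK m) m = -1.
Proof. unfold sn. rewrite am_opp_K, sin_neg, sin_PI2. reflexivity. Qed.

Lemma cn_opp_K : cn (- ellK m) m = 0.
Proof. unfold cn. rewrite am_opp_K, cos_neg. apply cos_PI2. Qed.

(* On [[-K, K]] the function [sn] is the increasing bijection onto [[-1, 1]];
   [arcsn] is its inverse. *)
Definition arcsn (v : R) : R := ellF (asin v) m.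

Lemma sn_arcsn (v : R) : -1 <= v <= 1 -> sn (arcsn v) m = v.
Proof. intros. unfold sn, arcsn. rewrite am_ellF. apply sin_asin; auto. Qed.

Lemma arcsn_opp (v : R) : arcsn (- v) = - arcsn v.
Proof. unfold arcsn. rewrite asin_opp. apply ellF_opp. Qed.

Lemma arcsn_0 : arcsn 0 = 0.
Proof. unfold arcsn. rewrite asin_0. apply ellF_0. Qed.

Lemma arcsn_1 : arcsn 1 = ellK m.
Proof. unfold arcsn. rewrite asin_1. reflexivity. Qed.

Lemma arcsn_bounds (v : R) : 0 < v < 1 -> 0 < arcsn v < ellK m.
Proof.
  intros Hv. unfold arcsn, ellK.
  pose proof (asin_bound_lt v ltac:(lra)).
  assert (0 < asin v).
  { destruct (Rle_dec (asin v) 0) as [h|]; [exfalso|lra].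
    pose proof (sin_ge_0 (- asin v) ltac:(lra) ltac:(pose proof PI_RGT_0; lra)).
    rewrite sin_neg, sin_asin in *; lra. }
  rewrite <- ellF_0. split; apply ellF_lt; lra.
Qed.

Lemma arcsn_sn (x : R) : - ellK m <= x <= ellK m -> arcsn (sn x m) = x.
Proof.
  intros [h1 h2]. unfold arcsn, sn. rewrite asin_sin; [apply ellF_am|].
  rewrite <- am_opp_K, <- am_K. split; apply am_le; auto.
Qed.

Lemma sn2_eq_on_rect (x v : R) : - ellK m <= x <= ellK m -> sn x m ^ 2 = v ^ 2 ->
  x = arcsn v \/ x = - arcsn v.
Proof.
  intros Hx E. rewrite <- arcsn_opp, <- (arcsn_sn x Hx).
  assert (sn x m = v \/ sn x m = - v) as [-> | ->] by nra; auto.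
Qed.

Lemma sin_eq0_small (t : R) : Rabs t < 2 -> sin t = 0 -> t = 0.
Proof.
  intros Ht E. pose proof PI2_1.
  destruct (Rtotal_order t 0) as [h|[h|h]]; auto.
  - pose proof (sin_gt_0 (- t)). rewrite sin_neg in *. rewrite Rabs_left in Ht; lra.
  - pose proof (sin_gt_0 t). rewrite Rabs_right in Ht; lra.
Qed.

(* [am] is 1-Lipschitz, so near [0] (resp. [+-K]) it stays within [2 < PI]
   of [0] (resp. [+-PI/2]). *)
Lemma sn_eq0_near_0 (x : R) : Rabs x < 2 -> sn x m = 0 -> x = 0.
Proof.
  intros Hx E. unfold sn in E.
  pose proof (am_lipschitz x 0). rewrite am_0, !Rminus_0_r in *.
  apply sin_eq0_small in E; [|lra].
  rewrite <- (ellF_am x), E. apply ellF_0.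
Qed.

Lemma cn_eq0_near_K (y y0 : R) : (y0 = ellK m \/ y0 = - ellK m) ->
  Rabs (y - y0) < 2 -> cn y m = 0 -> y = y0.
Proof.
  intros Hy0 Hy E. unfold cn in E.
  pose proof (am_lipschitz y y0). rewrite <- (ellF_am y).
  destruct Hy0 as [-> | ->].
  - rewrite am_K in *. rewrite <- sin_shift in E.
    apply sin_eq0_small in E.
    + replace (am y m) with (PI / 2) by lra. reflexivity.
    + rewrite <- Rabs_Ropp. replace (- (PI / 2 - am y m)) with (am y m - PI / 2) by ring. lra.
  - rewrite am_opp_K in *. rewrite <- cos_neg, <- sin_shift in E.
    apply sin_eq0_small in E.
    + replace (am y m) with (- (PI / 2)) by lra. apply ellF_opp.
    + replace (PI / 2 - - am y m) with (am y m - - (PI / 2)) by ring. lra.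
Qed.

End RealJacobi.

Lemma differentiable_pt_lim_eq (f : R -> R -> R) x y a b a' b' :
  differentiable_pt_lim f x y a b -> a = a' -> b = b' -> differentiable_pt_lim f x y a' b'.
Proof. intros H -> ->. exact H. Qed.

Lemma differentiable_pt_lim_const x y c : differentiable_pt_lim (fun _ _ => c) x y 0 0.
Proof.
  rewrite <- filterdiff_differentiable_pt_lim.
  eapply filterdiff_ext_lin; [apply filterdiff_const|].
  intros [u v]. unfold zero; simpl. ring.
Qed.

Lemma differentiable_pt_lim_snd_fun (f : R -> R) x y l :
  derivable_pt_lim f y l -> differentiable_pt_lim (fun _ v => f v) x y 0 l.
Proof.
  intros H. rewrite <- filterdiff_differentiable_pt_lim. apply is_derive_Reals in H.
  eapply filterdiff_ext_lin.
  - apply (filterdiff_comp' (fun u : R * R => snd u) f); [|exact H].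
    apply filterdiff_linear, is_linear_snd.
  - intros [u v]. unfold scal; simpl; unfold mult; simpl. ring.
Qed.

Lemma differentiable_pt_lim_plus (f g : R -> R -> R) x y a b c d :
  differentiable_pt_lim f x y a b -> differentiable_pt_lim g x y c d ->
  differentiable_pt_lim (fun u v => f u v + g u v) x y (a + c) (b + d).
Proof.
  rewrite <- !filterdiff_differentiable_pt_lim. intros Hf Hg.
  eapply filterdiff_ext_lin.
  - apply (filterdiff_plus_fct (K := R_AbsRing) (fun u : R * R => f (fst u) (snd u))
             (fun u => g (fst u) (snd u))); [exact Hf | exact Hg].
  - intros [u v]. unfold plus; simpl. ring.
Qed.

Lemma differentiable_pt_lim_mult (f g : R -> R -> R) x y a b c d :
  differentiable_pt_lim f x y a b -> differentiable_pt_lim g x y c d ->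
  differentiable_pt_lim (fun u v => f u v * g u v) x y
    (a * g x y + f x y * c) (b * g x y + f x y * d).
Proof.
  rewrite <- !filterdiff_differentiable_pt_lim. intros Hf Hg.
  eapply filterdiff_ext_lin.
  - apply (filterdiff_mult_fct (K := R_AbsRing) (fun u : R * R => f (fst u) (snd u))
             (fun u => g (fst u) (snd u))); [apply Rmult_comm | exact Hf | exact Hg].
  - intros [u v]. unfold plus, mult; simpl. ring.
Qed.

Lemma differentiable_pt_lim_inv (f : R -> R -> R) x y a b :
  differentiable_pt_lim f x y a b -> f x y <> 0 ->
  differentiable_pt_lim (fun u v => / f u v) x y (- a / f x y ^ 2) (- b / f x y ^ 2).
Proof.
  rewrite <- !filterdiff_differentiable_pt_lim. intros Hf Hn.
  assert (Hinv : is_derive Rinv (f x y) (- / f x y ^ 2)) by (auto_derive; [auto | field; auto]).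
  eapply filterdiff_ext_lin.
  - apply (filterdiff_comp' (fun u : R * R => f (fst u) (snd u)) Rinv); [exact Hf | exact Hinv].
  - intros [u v]. unfold scal; simpl; unfold mult; simpl. field. auto.
Qed.

Lemma differentiable_pt_lim_div (f g : R -> R -> R) x y a b c d :
  differentiable_pt_lim f x y a b -> differentiable_pt_lim g x y c d -> g x y <> 0 ->
  differentiable_pt_lim (fun u v => f u v / g u v) x y
    ((a * g x y - f x y * c) / g x y ^ 2) ((b * g x y - f x y * d) / g x y ^ 2).
Proof.
  intros Hf Hg Hn.
  eapply differentiable_pt_lim_eq;
    [apply (differentiable_pt_lim_mult _ _ _ _ _ _ _ _ Hf (differentiable_pt_lim_inv _ _ _ _ _ Hg Hn))
    | field; auto | field; auto].
Qed.


(** * Punctured limits and complex derivatives *)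

Definition Clim (f : C -> C) (z0 l : C) : Prop :=
  forall eps, 0 < eps -> exists del, 0 < del /\
    forall z, z <> z0 -> Cmod (z - z0)%C < del -> Cmod (f z - l)%C < eps.

Definition is_Cderiv (f : C -> C) (z0 l : C) : Prop :=
  Clim (fun z => (f z - f z0) / (z - z0))%C z0 l.

Lemma Cmod_sub_triangle (a b c : C) :
  Cmod (a - c)%C <= Cmod (a - b)%C + Cmod (b - c)%C.
Proof.
  replace (Cminus a c) with (Cplus (Cminus a b) (Cminus b c)) by (unfold Cminus; ring).
  apply Cmod_triangle.
Qed.

(* [ball] on [C] is the max-norm ball, which sits between the [Cmod]-balls
   of radii [r] and [sqrt 2 * r]. *)
Lemma filterlim_of_Clim (f : C -> C) (z0 l : C) :
  Clim f z0 l -> filterlim f (locally' z0) (locally l).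
Proof.
  intros H. apply filterlim_locally. intros eps.
  destruct (H eps (cond_pos eps)) as [del [Hdel Hz]].
  assert (Hr : 0 < del / sqrt 2) by (apply Rdiv_lt_0_compat; [|apply sqrt_lt_R0]; lra).
  exists (mkposreal _ Hr). intros y Hy Hne.
  apply C_NormedModule_mixin_compat1, Hz; auto.
  pose proof (C_NormedModule_mixin_compat2 z0 y (mkposreal _ Hr) Hy) as H1. simpl in H1.
  replace (sqrt 2 * (del / sqrt 2)) with del in H1; [exact H1|].
  field. apply Rgt_not_eq, sqrt_lt_R0. lra.
Qed.

Lemma Clim_of_filterlim (f : C -> C) (z0 l : C) :
  filterlim f (locally' z0) (locally l) -> Clim f z0 l.
Proof.
  intros H eps Heps.
  assert (Hr : 0 < eps / sqrt 2) by (apply Rdiv_lt_0_compat; [|apply sqrt_lt_R0]; lra).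
  destruct (proj1 (filterlim_locally f l) H (mkposreal _ Hr)) as [r Hball].
  exists r. split; [apply cond_pos|]. intros z Hne Hz.
  pose proof (C_NormedModule_mixin_compat2 l (f z) _
                (Hball z (C_NormedModule_mixin_compat1 _ _ _ Hz) Hne)) as H1.
  simpl in H1. replace (sqrt 2 * (eps / sqrt 2)) with eps in H1; [exact H1|].
  field. apply Rgt_not_eq, sqrt_lt_R0. lra.
Qed.

Lemma Clim_ext_near (f g : C -> C) (z0 l : C) :
  (exists del, 0 < del /\ forall z, z <> z0 -> Cmod (z - z0)%C < del -> f z = g z) ->
  Clim f z0 l -> Clim g z0 l.
Proof.
  intros [d0 [Hd0 E]] H eps Heps. destruct (H eps Heps) as [del [Hd Hz]].
  exists (Rmin d0 del). split; [apply Rmin_pos; auto|].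
  intros z Hne Hz'. pose proof (Rmin_l d0 del). pose proof (Rmin_r d0 del).
  rewrite <- E by (auto; lra). apply Hz; auto. lra.
Qed.

Lemma Clim_ext (f g : C -> C) (z0 l : C) :
  (forall z, z <> z0 -> f z = g z) -> Clim f z0 l -> Clim g z0 l.
Proof. intros E. apply Clim_ext_near. exists 1. split; [lra|]. auto. Qed.

Lemma Clim_const (a z0 : C) : Clim (fun _ => a) z0 a.
Proof.
  intros eps Heps. exists 1. split; [lra|]. intros.
  unfold Cminus. rewrite Cplus_opp_r, Cmod_0. exact Heps.
Qed.

Lemma Clim_id (z0 : C) : Clim (fun z => z) z0 z0.
Proof. intros eps Heps. exists eps. auto. Qed.

Lemma Clim_plus (f g : C -> C) (z0 a b : C) :
  Clim f z0 a -> Clim g z0 b -> Clim (fun z => f z + g z)%C z0 (a + b).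
Proof.
  intros Hf Hg eps Heps.
  destruct (Hf (eps / 2) ltac:(lra)) as [d1 [Hd1 H1]].
  destruct (Hg (eps / 2) ltac:(lra)) as [d2 [Hd2 H2]].
  exists (Rmin d1 d2). split; [apply Rmin_pos; auto|].
  intros z Hne Hz. pose proof (Rmin_l d1 d2). pose proof (Rmin_r d1 d2).
  replace (Cminus (Cplus (f z) (g z)) (Cplus a b))
    with (Cplus (Cminus (f z) a) (Cminus (g z) b)) by (unfold Cminus; ring).
  eapply Rle_lt_trans; [apply Cmod_triangle|].
  specialize (H1 z Hne ltac:(lra)). specialize (H2 z Hne ltac:(lra)). lra.
Qed.

Lemma Clim_mult (f g : C -> C) (z0 a b : C) :
  Clim f z0 a -> Clim g z0 b -> Clim (fun z => f z * g z)%C z0 (a * b).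
Proof.
  intros Hf Hg eps Heps.
  set (M := 1 + Cmod a + Cmod b).
  pose proof (Cmod_ge_0 a). pose proof (Cmod_ge_0 b).
  assert (HM : 0 < M) by (unfold M; lra).
  set (e := Rmin 1 (eps / (2 * M))).
  assert (He : 0 < e) by (apply Rmin_pos; [lra | apply Rdiv_lt_0_compat; lra]).
  assert (He1 : e <= 1) by apply Rmin_l.
  assert (HeM : e * M <= eps / 2).
  { apply Rle_trans with (eps / (2 * M) * M).
    - apply Rmult_le_compat_r; [lra | apply Rmin_r].
    - right. field. lra. }
  destruct (Hf e He) as [d1 [Hd1 H1]]. destruct (Hg e He) as [d2 [Hd2 H2]].
  exists (Rmin d1 d2). split; [apply Rmin_pos; auto|].
  intros z Hne Hz. pose proof (Rmin_l d1 d2). pose proof (Rmin_r d1 d2).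
  specialize (H1 z Hne ltac:(lra)). specialize (H2 z Hne ltac:(lra)).
  set (u := Cminus (f z) a) in *. set (v := Cminus (g z) b) in *.
  replace (Cminus (Cmult (f z) (g z)) (Cmult a b))
    with (Cplus (Cmult u v) (Cplus (Cmult a v) (Cmult u b))) by (unfold u, v, Cminus; ring).
  eapply Rle_lt_trans; [apply Cmod_triangle|]. rewrite Cmod_mult.
  eapply Rle_lt_trans; [apply Rplus_le_compat_l, Cmod_triangle|]. rewrite !Cmod_mult.
  pose proof (Cmod_ge_0 u). pose proof (Cmod_ge_0 v).
  assert (Cmod u * Cmod v <= e * e) by (apply Rmult_le_compat; lra).
  assert (Cmod a * Cmod v <= Cmod a * e) by (apply Rmult_le_compat_l; lra).
  assert (Cmod u * Cmod b <= e * Cmod b) by (apply Rmult_le_compat_r; lra).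
  unfold M in *. nra.
Qed.

Lemma Cmod_ge_half_of_close (w a : C) (e : R) :
  e <= Cmod a / 2 -> Cmod (w - a)%C < e -> Cmod a / 2 <= Cmod w.
Proof.
  intros He H. pose proof (Cmod_sub_triangle a w (RtoC 0)).
  replace (Cminus a w) with (Copp (Cminus w a)) in * by (unfold Cminus; ring).
  replace (Cminus a (RtoC 0)) with a in * by (unfold Cminus; ring).
  replace (Cminus w (RtoC 0)) with w in * by (unfold Cminus; ring).
  rewrite Cmod_opp in *. lra.
Qed.

Lemma Clim_inv (f : C -> C) (z0 a : C) :
  a <> 0 -> Clim f z0 a -> Clim (fun z => / f z)%C z0 (/ a).
Proof.
  intros Ha Hf eps Heps.
  assert (Hma : 0 < Cmod a) by (apply Cmod_gt_0; auto).
  set (e := Rmin (Cmod a / 2) (eps * Cmod a * Cmod a / 2)).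
  assert (He : 0 < e).
  { pose proof (Rmult_lt_0_compat _ _ (Rmult_lt_0_compat _ _ Heps Hma) Hma).
    apply Rmin_pos; lra. }
  assert (He1 : e <= Cmod a / 2) by apply Rmin_l.
  assert (He2 : e <= eps * Cmod a * Cmod a / 2) by apply Rmin_r.
  destruct (Hf e He) as [del [Hdel H]]. exists del. split; auto.
  intros z Hne Hz. specialize (H z Hne Hz).
  pose proof (Cmod_ge_half_of_close (f z) a e He1 H) as Hfz.
  assert (Hfz0 : f z <> RtoC 0) by (intro h; rewrite h, Cmod_0 in Hfz; lra).
  replace (Cminus (Cinv (f z)) (Cinv a)) with (Cdiv (Copp (Cminus (f z) a)) (Cmult (f z) a))
    by (field; auto).
  rewrite Cmod_div by (apply Cmult_neq_0; auto). rewrite Cmod_opp, Cmod_mult.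
  apply Rmult_lt_reg_r with (Cmod (f z) * Cmod a); [nra|].
  unfold Rdiv. rewrite Rmult_assoc, Rinv_l, Rmult_1_r by nra.
  nra.
Qed.

Lemma Clim_sub (f g : C -> C) (z0 a b : C) :
  Clim f z0 a -> Clim g z0 b -> Clim (fun z => f z - g z)%C z0 (a - b).
Proof.
  intros Hf Hg. unfold Cminus. apply Clim_plus; auto.
  replace (Copp b) with (Cmult (RtoC (-1)) b)
    by (unfold RtoC, Cmult, Copp; simpl; f_equal; ring).
  eapply Clim_ext; [|apply (Clim_mult _ _ _ _ _ (Clim_const _ _) Hg)].
  intros z _. unfold RtoC, Cmult, Copp; simpl. f_equal; ring.
Qed.

Lemma Clim_sub_center (z0 : C) : Clim (fun z => z - z0)%C z0 0.
Proof.
  replace (RtoC 0) with (Cminus z0 z0) by (unfold Cminus; ring).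
  apply Clim_sub; [apply Clim_id | apply Clim_const].
Qed.

Lemma Clim_unique (f : C -> C) (z0 a b : C) : Clim f z0 a -> Clim f z0 b -> a = b.
Proof.
  intros Ha Hb. destruct (Ceq_dec a b) as [|hne]; auto. exfalso.
  assert (Hm : 0 < Cmod (Cminus a b)) by (apply Cmod_gt_0, Cminus_eq_contra; auto).
  destruct (Ha (Cmod (Cminus a b) / 2) ltac:(lra)) as [d1 [Hd1 H1]].
  destruct (Hb (Cmod (Cminus a b) / 2) ltac:(lra)) as [d2 [Hd2 H2]].
  set (d := Rmin d1 d2 / 2).
  pose proof (Rmin_l d1 d2). pose proof (Rmin_r d1 d2). pose proof (Rmin_pos _ _ Hd1 Hd2).
  set (z := Cplus z0 (RtoC d)).
  assert (Hz : Cminus z z0 = RtoC d) by (unfold z, Cminus; ring).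
  assert (Hne : z <> z0).
  { intro h. rewrite h in Hz. unfold Cminus in Hz. rewrite Cplus_opp_r in Hz.
    injection Hz. unfold d. lra. }
  assert (Hmod : Cmod (Cminus z z0) = d) by (rewrite Hz, Cmod_R, Rabs_right; unfold d; lra).
  specialize (H1 z Hne ltac:(unfold d in *; lra)). specialize (H2 z Hne ltac:(unfold d in *; lra)).
  pose proof (Cmod_sub_triangle a (f z) b).
  replace (Cminus a (f z)) with (Copp (Cminus (f z) a)) in * by (unfold Cminus; ring).
  rewrite Cmod_opp in *. lra.
Qed.

Lemma Clim_nonzero_near (f : C -> C) (z0 l : C) : Clim f z0 l -> l <> 0 ->
  exists del, 0 < del /\ forall z, z <> z0 -> Cmod (z - z0)%C < del -> f z <> 0.
Proof.
  intros H Hl. assert (Hm : 0 < Cmod l) by (apply Cmod_gt_0; auto).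
  destruct (H (Cmod l) Hm) as [del [Hd Hz]]. exists del. split; auto.
  intros z Hne Hz' E. specialize (Hz z Hne Hz'). rewrite E in Hz.
  unfold Cminus in Hz. rewrite Cplus_0_l, Cmod_opp in Hz. lra.
Qed.

Lemma Clim_of_is_Cderiv (f : C -> C) (z0 l : C) : is_Cderiv f z0 l -> Clim f z0 (f z0).
Proof.
  intros H.
  assert (H1 : Clim (fun z => Cplus (f z0) (Cmult (Cminus z z0)
                 (Cdiv (Cminus (f z) (f z0)) (Cminus z z0)))) z0
                 (Cplus (f z0) (Cmult (RtoC 0) l))).
  { apply Clim_plus; [apply Clim_const | apply Clim_mult; auto using Clim_sub_center]. }
  replace (Cplus (f z0) (Cmult (RtoC 0) l)) with (f z0) in H1 by ring.
  eapply Clim_ext; [|exact H1]. intros z hz. simpl. field. apply Cminus_eq_contra. auto.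
Qed.

Lemma is_Cderiv_of_Cauchy_Riemann (f : C -> C) x0 y0 a b :
  differentiable_pt_lim (fun x y => Re (f (x, y))) x0 y0 a b ->
  differentiable_pt_lim (fun x y => Im (f (x, y))) x0 y0 (- b) a ->
  is_Cderiv f (x0, y0) (a, - b).
Proof.
  intros HU HV eps Heps.
  assert (He : 0 < eps / 4) by lra.
  destruct (HU (mkposreal _ He)) as [d1 H1]. destruct (HV (mkposreal _ He)) as [d2 H2].
  exists (Rmin d1 d2). split; [apply Rmin_pos; apply cond_pos|].
  intros [u v] Hne Hz. pose proof (Rmin_l d1 d2). pose proof (Rmin_r d1 d2).
  set (w := Cminus (u, v) (x0, y0)) in *.
  assert (Hwp : 0 < Cmod w) by (apply Cmod_gt_0, Cminus_eq_contra; auto).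
  assert (Hmax : Rmax (Rabs (u - x0)) (Rabs (v - y0)) <= Cmod w) by apply (Rmax_Cmod w).
  pose proof (Rmax_l (Rabs (u - x0)) (Rabs (v - y0))).
  pose proof (Rmax_r (Rabs (u - x0)) (Rabs (v - y0))).
  specialize (H1 u v ltac:(lra) ltac:(lra)). specialize (H2 u v ltac:(lra) ltac:(lra)).
  simpl in H1, H2.
  set (err := Cminus (Cminus (f (u, v)) (f (x0, y0))) (Cmult (a, - b) w)).
  assert (HRe : Rabs (Re err) <= eps / 4 * Cmod w).
  { eapply Rle_trans; [|apply Rmult_le_compat_l; [lra | exact Hmax]].
    replace (Re err) with (Re (f (u, v)) - Re (f (x0, y0)) - (a * (u - x0) + b * (v - y0)));
      [exact H1|].
    unfold err, w, Cminus, Cplus, Copp, Cmult, Re. simpl. ring. }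
  assert (HIm : Rabs (Im err) <= eps / 4 * Cmod w).
  { eapply Rle_trans; [|apply Rmult_le_compat_l; [lra | exact Hmax]].
    replace (Im err) with (Im (f (u, v)) - Im (f (x0, y0)) - (- b * (u - x0) + a * (v - y0)));
      [exact H2|].
    unfold err, w, Cminus, Cplus, Copp, Cmult, Im. simpl. ring. }
  replace (Cminus (Cdiv (Cminus (f (u, v)) (f (x0, y0))) w) (a, - b)) with (Cdiv err w)
    by (unfold err; field; apply Cminus_eq_contra; auto).
  rewrite Cmod_div by (apply Cminus_eq_contra; auto).
  pose proof (Cmod_2Rmax err) as H5. pose proof (Rmax_lub _ _ _ HRe HIm) as H6.
  assert (sqrt 2 < 2).
  { rewrite <- (sqrt_pow2 2) at 2 by lra. apply sqrt_lt_1_alt. lra. }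
  apply Rmult_lt_reg_r with (Cmod w); auto.
  unfold Rdiv at 1. rewrite Rmult_assoc, Rinv_l, Rmult_1_r by lra.
  apply Rle_lt_trans with (sqrt 2 * (eps / 4 * Cmod w)).
  - eapply Rle_trans; [exact H5|]. apply Rmult_le_compat_l; [apply sqrt_pos | exact H6].
  - assert (0 < eps / 4 * Cmod w) by (apply Rmult_lt_0_compat; lra). nra.
Qed.

Lemma order_at_of_Clim (f : C -> C) (z0 : C) (m : Z) (L : C) : L <> 0 ->
  Clim (fun z => Cpow_Z (z - z0) (- m) * f z)%C z0 L -> order_at f z0 m.
Proof. intros HL H. exists L. split; auto. apply filterlim_of_Clim, H. Qed.

Lemma Clim_of_order_at (f : C -> C) (z0 : C) (m : Z) : order_at f z0 m ->
  exists L : C, L <> 0 /\ Clim (fun z => Cpow_Z (z - z0) (- m) * f z)%C z0 L.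
Proof. intros [L [HL H]]. exists L. split; auto. apply Clim_of_filterlim, H. Qed.

Lemma Cpow_nat_neq_0 (a : C) (n : nat) : a <> 0 -> Cpow_nat a n <> 0.
Proof. intros Ha. induction n; simpl; [apply C1_nz | apply Cmult_neq_0; auto]. Qed.

Lemma Clim_Cpow_nat_sub_center (z0 : C) (n : nat) : (1 <= n)%nat ->
  Clim (fun z => Cpow_nat (z - z0)%C n) z0 0.
Proof.
  intros Hn. destruct n as [|n]; [lia|]. simpl.
  replace (RtoC 0) with (Cmult (RtoC 0) (Cpow_nat (RtoC 0) n)) by ring.
  apply Clim_mult; [apply Clim_sub_center|].
  clear Hn. induction n; simpl; [apply Clim_const|].
  apply Clim_mult; auto using Clim_sub_center.
Qed.

Lemma Clim_0_of_order_pos (f : C -> C) (z0 : C) (m : Z) :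
  order_at f z0 m -> (0 < m)%Z -> Clim f z0 0.
Proof.
  intros H Hm. destruct (Clim_of_order_at _ _ _ H) as [L [_ HL]].
  destruct m as [|p|p]; try lia. simpl in HL.
  pose proof (Clim_mult _ _ _ _ _ (Clim_Cpow_nat_sub_center z0 (Pos.to_nat p) ltac:(lia)) HL) as H0.
  rewrite Cmult_0_l in H0.
  eapply Clim_ext; [|exact H0]. intros z hz. simpl.
  pose proof (Cpow_nat_neq_0 _ (Pos.to_nat p) (Cminus_eq_contra _ _ hz)). field. auto.
Qed.

(* A function of negative order is unbounded at [z0]: [(z - z0)^n f z] would
   otherwise tend to [0]. *)
Lemma order_neg_no_Clim (f : C -> C) (z0 L0 : C) (m : Z) :
  order_at f z0 m -> (m < 0)%Z -> ~ Clim f z0 L0.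
Proof.
  intros H Hm HL0. destruct (Clim_of_order_at _ _ _ H) as [L [HL HCL]].
  destruct m as [|p|p]; try lia. simpl in HCL.
  pose proof (Clim_mult _ _ _ _ _ (Clim_Cpow_nat_sub_center z0 (Pos.to_nat p) ltac:(lia)) HL0) as H0.
  rewrite Cmult_0_l in H0. apply HL. eapply Clim_unique; eauto.
Qed.

Lemma order_0_of_Clim (f : C -> C) (z0 L : C) : Clim f z0 L -> L <> 0 -> order_at f z0 0.
Proof.
  intros H HL. apply (order_at_of_Clim _ _ _ L HL).
  eapply Clim_ext; [|exact H]. intros z _. simpl. ring.
Qed.

Lemma RtoC_neq_0 (x : R) : x <> 0 -> RtoC x <> 0.
Proof. intros H h. injection h. auto. Qed.

Lemma double_neq_0 (a : C) : a <> 0 -> (a + a)%C <> 0.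
Proof.
  intros Ha. replace (a + a)%C with ((1 + 1) * a)%C by ring.
  apply Cmult_neq_0; auto. rewrite <- RtoC_plus. apply RtoC_neq_0. lra.
Qed.

(** * Orders of [N / (A - c w^2) - S] *)

Section PhiOf.

Variables N A c S : R.

Definition phi_of (w : C -> C) (z : C) : C := (N / (A - c * (w z * w z)) - S)%C.

Lemma Clim_phi_of (w : C -> C) (z0 w0 : C) : Clim w z0 w0 -> (A - c * (w0 * w0))%C <> 0 ->
  Clim (phi_of w) z0 (N / (A - c * (w0 * w0)) - S)%C.
Proof.
  intros H Hq. unfold phi_of, Cdiv.
  apply Clim_sub; [|apply Clim_const].
  apply Clim_mult; [apply Clim_const|]. apply Clim_inv; auto.
  apply Clim_sub; [apply Clim_const|]. apply Clim_mult; [apply Clim_const|].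
  apply Clim_mult; auto.
Qed.

(* Where [|w|] blows up, [N / (A - c w^2)] tends to [0]. *)
Lemma Clim_phi_of_unbounded (w : C -> C) (z0 : C) : 0 < A -> 0 < c ->
  (forall M, exists del, 0 < del /\
     forall z, z <> z0 -> Cmod (z - z0)%C < del -> M <= Cmod (w z) ^ 2) ->
  Clim (phi_of w) z0 (RtoC (- S)).
Proof.
  intros HA Hc0 Hw eps Heps.
  pose proof (Rabs_pos N).
  assert (0 <= Rabs N / eps) by (apply Rdiv_le_0_compat; lra).
  destruct (Hw ((A + Rabs N / eps + 1) / c)) as [del [Hdel Hz]].
  exists del. split; auto. intros z Hne Hd. specialize (Hz z Hne Hd).
  set (q := (A - c * (w z * w z))%C).
  assert (Hq : c * Cmod (w z) ^ 2 - A <= Cmod q).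
  { pose proof (Cmod_sub_triangle (c * (w z * w z)) A 0).
    replace (c * (w z * w z) - A)%C with (Copp q) in * by (unfold q, Cminus; ring).
    replace (A - 0)%C with (RtoC A) in * by (unfold Cminus; ring).
    replace (c * (w z * w z) - 0)%C with (c * (w z * w z))%C in * by (unfold Cminus; ring).
    rewrite Cmod_opp, !Cmod_mult, !Cmod_R, !Rabs_right in * by lra. simpl. lra. }
  assert (Hqn : Rabs N / eps < Cmod q).
  { assert (c * ((A + Rabs N / eps + 1) / c) <= c * Cmod (w z) ^ 2)
      by (apply Rmult_le_compat_l; lra).
    replace (c * ((A + Rabs N / eps + 1) / c)) with (A + Rabs N / eps + 1) in * by (field; lra).
    lra. }
  assert (Hq0 : q <> 0) by (apply Cmod_gt_0; lra).
  unfold phi_of. fold q.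
  replace (N / q - S - RtoC (- S))%C with (N / q)%C by (rewrite RtoC_opp; unfold Cminus; ring).
  rewrite Cmod_div, Cmod_R by auto.
  apply Rmult_lt_reg_r with (Cmod q); [lra|].
  unfold Rdiv. rewrite Rmult_assoc, Rinv_l, Rmult_1_r by lra.
  apply Rmult_lt_reg_r with (/ eps); [apply Rinv_0_lt_compat; lra|].
  replace (eps * Cmod q * / eps) with (Cmod q) by (field; lra). exact Hqn.
Qed.

Hypothesis Hc : c <> 0.

Section Derivable.

Variables (w : C -> C) (z0 l : C).
Hypothesis Hw : is_Cderiv w z0 l.
Hypothesis Hl : l <> 0.

(* [w z^2 - w z0^2 = (w z + w z0) * (w z - w z0)], and the difference
   quotient of [w] tends to [l]. *)
Lemma Clim_sq_diff_quotient :
  Clim (fun z => (w z + w z0) * ((w z - w z0) / (z - z0)))%C z0 ((w z0 + w z0) * l)%C.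
Proof.
  apply Clim_mult; [|exact Hw].
  apply Clim_plus; [apply (Clim_of_is_Cderiv _ _ _ Hw) | apply Clim_const].
Qed.

Lemma order_phi_of_pole : w z0 <> 0 -> (A - c * (w z0 * w z0))%C = 0 -> N <> 0 ->
  order_at (phi_of w) z0 (-1).
Proof.
  intros Hw0 Hq HN.
  set (w0 := w z0) in *.
  set (Q := fun z => (- c * ((w z + w0) * ((w z - w0) / (z - z0))))%C).
  assert (HQ : Clim Q z0 (- c * ((w0 + w0) * l))%C)
    by (apply Clim_mult; [apply Clim_const | apply Clim_sq_diff_quotient]).
  assert (HL : (- c * ((w0 + w0) * l))%C <> 0).
  { apply Cmult_neq_0; [|apply Cmult_neq_0; auto using double_neq_0].
    rewrite <- RtoC_opp. apply RtoC_neq_0. lra. }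
  apply (order_at_of_Clim _ _ _ (N * / (- c * ((w0 + w0) * l)) - 0 * S)%C).
  { rewrite Cmult_0_l. unfold Cminus. rewrite Copp_0, Cplus_0_r.
    apply Cmult_neq_0; [apply RtoC_neq_0; auto|].
    intro h. apply C1_nz. rewrite <- (Cinv_r _ HL), h. ring. }
  apply (Clim_ext (fun z => (N * / Q z - (z - z0) * S)%C)).
  2: { apply Clim_sub; [|apply Clim_mult; auto using Clim_sub_center, Clim_const].
       apply Clim_mult; [apply Clim_const | apply Clim_inv; auto]. }
  intros z hz. pose proof (Cminus_eq_contra _ _ hz) as Hdz. simpl. unfold phi_of.
  assert (Eq : (A - c * (w z * w z))%C = (Q z * (z - z0))%C).
  { apply Ceq_minus in Hq. rewrite Hq. unfold Q. field. auto. }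
  rewrite Eq. unfold Cdiv.
  destruct (Ceq_dec (Q z) 0) as [->|hQ].
  - rewrite Cmult_0_l. replace (Cinv (RtoC 0)) with (RtoC 0)
      by (unfold Cinv, RtoC; simpl; f_equal; unfold Rdiv; ring).
    ring.
  - field. split; auto.
Qed.

Lemma order_phi_of_simple_zero : w z0 <> 0 -> (A - c * (w z0 * w z0))%C <> 0 ->
  RtoC N = (S * (A - c * (w z0 * w z0)))%C -> S <> 0 -> order_at (phi_of w) z0 1.
Proof.
  intros Hw0 Hq HN HS.
  set (w0 := w z0) in *. set (q0 := (A - c * (w0 * w0))%C) in *.
  assert (Hqz : Clim (fun z => A - c * (w z * w z))%C z0 q0).
  { apply Clim_sub; [apply Clim_const|]. apply Clim_mult; [apply Clim_const|].
    pose proof (Clim_of_is_Cderiv _ _ _ Hw). apply Clim_mult; auto. }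
  destruct (Clim_nonzero_near _ _ _ Hqz Hq) as [del [Hdel Hqn]].
  apply (order_at_of_Clim _ _ _ (S * c * ((w0 + w0) * l * / q0))%C).
  { repeat apply Cmult_neq_0; auto using RtoC_neq_0, double_neq_0.
    intro h. apply C1_nz. rewrite <- (Cinv_r _ Hq), h. ring. }
  eapply Clim_ext_near.
  2: { apply Clim_mult; [apply Clim_const|]. apply Clim_mult; [apply Clim_sq_diff_quotient|].
       apply Clim_inv; [exact Hq | exact Hqz]. }
  exists del. split; auto. intros z hz hd. specialize (Hqn z hz hd).
  pose proof (Cminus_eq_contra _ _ hz). simpl. unfold phi_of. rewrite HN. fold w0. unfold q0.
  field. auto.
Qed.

Lemma order_phi_of_double_zero : w z0 = 0 -> A <> 0 -> N = S * A -> S <> 0 ->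
  order_at (phi_of w) z0 2.
Proof.
  intros Hw0 HA HN HS.
  assert (Hqz : Clim (fun z => A - c * (w z * w z))%C z0 (A - c * (w z0 * w z0))%C).
  { apply Clim_sub; [apply Clim_const|]. apply Clim_mult; [apply Clim_const|].
    pose proof (Clim_of_is_Cderiv _ _ _ Hw). apply Clim_mult; auto. }
  rewrite Hw0 in Hqz. replace (A - c * (0 * 0))%C with (RtoC A) in Hqz by ring.
  destruct (Clim_nonzero_near _ _ _ Hqz (RtoC_neq_0 _ HA)) as [del [Hdel Hqn]].
  apply (order_at_of_Clim _ _ _ (S * c * (l * l * / A))%C).
  { repeat apply Cmult_neq_0; auto using RtoC_neq_0.
    intro h. apply C1_nz. rewrite <- (Cinv_r _ (RtoC_neq_0 _ HA)), h. ring. }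
  eapply Clim_ext_near.
  2: { apply Clim_mult; [apply Clim_const|]. apply Clim_mult; [apply Clim_mult; exact Hw|].
       apply Clim_inv; [apply RtoC_neq_0; auto | exact Hqz]. }
  exists del. split; auto. intros z hz hd. specialize (Hqn z hz hd).
  pose proof (Cminus_eq_contra _ _ hz). simpl. unfold phi_of. rewrite HN, Hw0, RtoC_mult.
  field. auto.
Qed.

End Derivable.

End PhiOf.

(** * Jacobi [sn] of a complex argument *)

Lemma pow2_eq_0 (x : R) : x ^ 2 = 0 -> x = 0.
Proof. intros H. destruct (Req_dec x 0) as [|hx]; auto. exfalso. exact (pow_nonzero x 2 hx H). Qed.

Lemma num_eq_0_of_Rdiv_eq_0 (a b : R) : b <> 0 -> a / b = 0 -> a = 0.
Proof. intros Hb H. replace a with (a / b * b) by (field; auto). rewrite H. ring. Qed.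

Lemma Cdiv_RtoC (a b r : R) : r <> 0 -> ((a, b) / r)%C = (a / r, b / r).
Proof. intros. unfold Cdiv, Cmult, Cinv, RtoC. simpl. f_equal; field; auto. Qed.

(* The imaginary part of [sn] satisfies the Cauchy-Riemann equations; in terms
   of [s, c, d = sn, cn, dn (x, k)], [s1, c1, d1 = sn, cn, dn (y, k')] these are
   polynomial identities modulo the Pythagorean relations. *)
Lemma sn_Cauchy_Riemann_x (k k' s c d s1 c1 d1 : R) :
  c ^ 2 = 1 - s ^ 2 -> d ^ 2 = 1 - k ^ 2 * s ^ 2 -> c1 ^ 2 = 1 - s1 ^ 2 ->
  d1 ^ 2 = 1 - k' ^ 2 * s1 ^ 2 -> k' ^ 2 = 1 - k ^ 2 ->
  c * d * (c1 * d1 * c1 - s1 * s1 * d1) * (c1 ^ 2 + k ^ 2 * s ^ 2 * s1 ^ 2)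
  - c * d * s1 * c1 * (- 2 * c1 * s1 * d1 + 2 * k ^ 2 * s ^ 2 * s1 * c1 * d1)
  = c * d * d1 * (c1 ^ 2 - k ^ 2 * s ^ 2 * s1 ^ 2).
Proof. intros. simpl in *. (* [nsatz] does not see through [^] *) nsatz. Qed.

Lemma sn_Cauchy_Riemann_y (k k' s c d s1 c1 d1 : R) :
  c ^ 2 = 1 - s ^ 2 -> d ^ 2 = 1 - k ^ 2 * s ^ 2 -> c1 ^ 2 = 1 - s1 ^ 2 ->
  d1 ^ 2 = 1 - k' ^ 2 * s1 ^ 2 -> k' ^ 2 = 1 - k ^ 2 ->
  (- s * d * d - k ^ 2 * s * c * c) * s1 * c1 * (c1 ^ 2 + k ^ 2 * s ^ 2 * s1 ^ 2)
  - c * d * s1 * c1 * (2 * k ^ 2 * s * c * d * s1 ^ 2)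
  = - (- k' ^ 2 * s * s1 * c1 * (c1 ^ 2 + k ^ 2 * s ^ 2 * s1 ^ 2)
       - s * d1 * (- 2 * c1 * s1 * d1 + 2 * k ^ 2 * s ^ 2 * s1 * c1 * d1)).
Proof. intros. simpl in *. nsatz. Qed.

Section ComplexSn.

Variable k : R.
Hypothesis Hk : 0 < k < 1.

Lemma k_sq_lt_1 : k ^ 2 < 1.
Proof. nra. Qed.

Lemma cmod_sq : cmod k ^ 2 = 1 - k ^ 2.
Proof. apply pow2_sqrt. nra. Qed.

Lemma cmod_sq_lt_1 : cmod k ^ 2 < 1.
Proof. rewrite cmod_sq. nra. Qed.

Definition sn_den (x y : R) : R :=
  cn y (cmod k) ^ 2 + k ^ 2 * sn x k ^ 2 * sn y (cmod k) ^ 2.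
Definition sn_num_re (x y : R) : R := sn x k * dn y (cmod k).
Definition sn_num_im (x y : R) : R := cn x k * dn x k * sn y (cmod k) * cn y (cmod k).
Definition sn_re (x y : R) : R := sn_num_re x y / sn_den x y.
Definition sn_im (x y : R) : R := sn_num_im x y / sn_den x y.

Lemma snC_eq (x y : R) : sn_den x y <> 0 -> snC (x, y) k = (sn_re x y, sn_im x y).
Proof. intros HD. apply Cdiv_RtoC, HD. Qed.

Lemma sn_den_nonneg (x y : R) : 0 <= sn_den x y.
Proof.
  unfold sn_den. pose proof (pow2_ge_0 (cn y (cmod k))).
  pose proof (pow2_ge_0 (k * sn x k * sn y (cmod k))). nra.
Qed.

(* [sn_den] is a sum of two squares, and [cn y k' = 0] forces [sn y k' ^ 2 = 1]. *)
Lemma sn_den_eq_0 (x y : R) : sn_den x y = 0 -> cn y (cmod k) = 0 /\ sn x k = 0.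
Proof.
  unfold sn_den. intros E. pose proof (sn2_cn2 (cmod k) y).
  pose proof (pow2_ge_0 (cn y (cmod k))). pose proof (pow2_ge_0 (k * sn x k * sn y (cmod k))).
  assert (Hc1 : cn y (cmod k) = 0) by (apply pow2_eq_0; nra).
  split; auto. rewrite Hc1 in *.
  assert (Hs1 : sn y (cmod k) ^ 2 = 1) by lra. rewrite Hs1 in E.
  apply pow2_eq_0, (Rmult_eq_reg_l (k ^ 2)); [lra | nra].
Qed.

Section Partials.

Variables x y : R.
Let s := sn x k.
Let c := cn x k.
Let d := dn x k.
Let s1 := sn y (cmod k).
Let c1 := cn y (cmod k).
Let d1 := dn y (cmod k).

Definition sn_dx : R := c * d * d1 * (c1 ^ 2 - k ^ 2 * s ^ 2 * s1 ^ 2) / sn_den x y ^ 2.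

Definition sn_dy : R :=
  (- cmod k ^ 2 * s * s1 * c1 * sn_den x y
   - s * d1 * (- 2 * c1 * s1 * d1 + 2 * k ^ 2 * s ^ 2 * s1 * c1 * d1)) / sn_den x y ^ 2.

Let Hs := differentiable_pt_lim_proj1_0 _ x y _ (derivable_pt_lim_sn _ k_sq_lt_1 x).
Let Hc := differentiable_pt_lim_proj1_0 _ x y _ (derivable_pt_lim_cn _ k_sq_lt_1 x).
Let Hd := differentiable_pt_lim_proj1_0 _ x y _ (derivable_pt_lim_dn _ k_sq_lt_1 x).
Let Hs1 := differentiable_pt_lim_snd_fun _ x y _ (derivable_pt_lim_sn _ cmod_sq_lt_1 y).
Let Hc1 := differentiable_pt_lim_snd_fun _ x y _ (derivable_pt_lim_cn _ cmod_sq_lt_1 y).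
Let Hd1 := differentiable_pt_lim_snd_fun _ x y _ (derivable_pt_lim_dn _ cmod_sq_lt_1 y).

Lemma differentiable_sn_den :
  differentiable_pt_lim sn_den x y
    (2 * k ^ 2 * s * c * d * s1 ^ 2) (- 2 * c1 * s1 * d1 + 2 * k ^ 2 * s ^ 2 * s1 * c1 * d1).
Proof.
  pose proof (differentiable_pt_lim_mult _ _ _ _ _ _ _ _
    (differentiable_pt_lim_mult _ _ _ _ _ _ _ _ (differentiable_pt_lim_const x y (k * k))
       (differentiable_pt_lim_mult _ _ _ _ _ _ _ _ Hs Hs))
    (differentiable_pt_lim_mult _ _ _ _ _ _ _ _ Hs1 Hs1)) as H.
  pose proof (differentiable_pt_lim_plus _ _ _ _ _ _ _ _
                (differentiable_pt_lim_mult _ _ _ _ _ _ _ _ Hc1 Hc1) H) as HD.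
  eapply differentiable_pt_lim_ext; [|eapply differentiable_pt_lim_eq; [exact HD | |]].
  - apply locally_2d_forall. intros u v. unfold sn_den. simpl. ring.
  - unfold s, c, d, s1. simpl. ring.
  - unfold s, s1, c1, d1. simpl. ring.
Qed.

Lemma differentiable_sn_num_re :
  differentiable_pt_lim sn_num_re x y (c * d * d1) (- cmod k ^ 2 * s * s1 * c1).
Proof.
  eapply differentiable_pt_lim_eq; [apply (differentiable_pt_lim_mult _ _ _ _ _ _ _ _ Hs Hd1) | |].
  - unfold c, d, d1. simpl. ring.
  - unfold s, s1, c1. simpl. ring.
Qed.

Lemma differentiable_sn_num_im :
  differentiable_pt_lim sn_num_im x y
    ((- s * d * d - k ^ 2 * s * c * c) * s1 * c1) (c * d * (c1 * d1 * c1 - s1 * s1 * d1)).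
Proof.
  pose proof (differentiable_pt_lim_mult _ _ _ _ _ _ _ _
    (differentiable_pt_lim_mult _ _ _ _ _ _ _ _
       (differentiable_pt_lim_mult _ _ _ _ _ _ _ _ Hc Hd) Hs1) Hc1) as H.
  eapply differentiable_pt_lim_eq; [exact H | |].
  - unfold s, c, d, s1, c1. simpl. ring.
  - unfold c, d, s1, c1, d1. simpl. ring.
Qed.

Hypothesis HD : sn_den x y <> 0.

Lemma differentiable_sn_re : differentiable_pt_lim sn_re x y sn_dx sn_dy.
Proof.
  eapply differentiable_pt_lim_eq;
    [apply (differentiable_pt_lim_div _ _ _ _ _ _ _ _
              differentiable_sn_num_re differentiable_sn_den HD) | |].
  - unfold sn_dx, Rdiv. f_equal. unfold sn_num_re, sn_den. fold s c d s1 c1 d1. ring.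
  - reflexivity.
Qed.

Lemma differentiable_sn_im : differentiable_pt_lim sn_im x y (- sn_dy) sn_dx.
Proof.
  pose proof (sn2_cn2 k x) as E1. pose proof (dn2 k k_sq_lt_1 x) as E2.
  pose proof (sn2_cn2 (cmod k) y) as E3. pose proof (dn2 (cmod k) cmod_sq_lt_1 y) as E4.
  fold s c d s1 c1 d1 in E1, E2, E3, E4.
  eapply differentiable_pt_lim_eq;
    [apply (differentiable_pt_lim_div _ _ _ _ _ _ _ _
              differentiable_sn_num_im differentiable_sn_den HD) | |];
    unfold sn_dx, sn_dy, Rdiv; rewrite ?Ropp_mult_distr_l; f_equal;
    unfold sn_num_im, sn_num_re, sn_den; fold s c d s1 c1 d1.
  - rewrite (sn_Cauchy_Riemann_y k (cmod k) s c d s1 c1 d1); auto using cmod_sq; lra.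
  - apply (sn_Cauchy_Riemann_x k (cmod k)); auto using cmod_sq; lra.
Qed.

End Partials.

Lemma sn_den_neq_0_near (x y : R) : sn_den x y <> 0 ->
  locally_2d (fun u v => sn_den u v <> 0) x y.
Proof.
  intros H. apply continuity_2d_pt_neq_0; auto.
  apply differentiable_continuity_pt. eexists; eexists. apply differentiable_sn_den.
Qed.

Lemma is_Cderiv_snC (x y : R) : sn_den x y <> 0 ->
  is_Cderiv (fun z => snC z k) (x, y) (sn_dx x y, - sn_dy x y).
Proof.
  intros HD. destruct (sn_den_neq_0_near x y HD) as [del Hdel].
  apply is_Cderiv_of_Cauchy_Riemann.
  - apply (differentiable_pt_lim_ext sn_re); [|apply differentiable_sn_re; auto].
    exists del. intros u v hu hv. rewrite snC_eq; auto.
  - apply (differentiable_pt_lim_ext sn_im); [|apply differentiable_sn_im; auto].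
    exists del. intros u v hu hv. rewrite snC_eq; auto.
Qed.

Lemma Clim_snC (x y : R) : sn_den x y <> 0 -> Clim (fun z => snC z k) (x, y) (snC (x, y) k).
Proof. intros HD. eapply Clim_of_is_Cderiv, is_Cderiv_snC, HD. Qed.

Lemma sn_den_pos_near_pole (x y y0 : R) : (y0 = ellK (cmod k) \/ y0 = - ellK (cmod k)) ->
  (x, y) <> (0, y0) -> Rabs x < 2 -> Rabs (y - y0) < 2 -> 0 < sn_den x y.
Proof.
  intros Hy0 Hne Hx Hy. pose proof (sn_den_nonneg x y).
  destruct (Req_dec (sn_den x y) 0) as [HD|]; [exfalso|lra].
  destruct (sn_den_eq_0 x y HD) as [Hc1 Hs].
  apply Hne. f_equal.
  - apply (sn_eq0_near_0 k k_sq_lt_1); auto.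
  - apply (cn_eq0_near_K (cmod k) cmod_sq_lt_1); auto.
Qed.

(* Near a pole the numerator of [snC] stays of size about [|cn x dn x sn y|] = 1
   while the denominator [sn_den] tends to [0]. *)
Lemma Cmod_snC_sq_ge (x y : R) : 0 < sn_den x y ->
  3 / 4 <= Rabs (cn x k * dn x k * sn y (cmod k)) ->
  1 / (2 * sn_den x y) <= Cmod (snC (x, y) k) ^ 2.
Proof.
  intros HD HG. rewrite snC_eq by lra. rewrite Cmod2_alt. unfold Re, Im, sn_re, sn_im. simpl.
  set (D := sn_den x y) in *.
  pose proof (sn2_cn2 (cmod k) y). pose proof (dn2 (cmod k) cmod_sq_lt_1 y).
  rewrite cmod_sq in *.
  assert (HP : k ^ 2 * sn x k ^ 2 <= sn_num_re x y ^ 2).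
  { unfold sn_num_re. rewrite Rpow_mult_distr, (Rmult_comm (k ^ 2)).
    apply Rmult_le_compat_l; [apply pow2_ge_0|].
    pose proof (pow2_ge_0 (cn y (cmod k))). pose proof k_sq_lt_1.
    assert (0 <= (1 - k ^ 2) * (1 - sn y (cmod k) ^ 2)) by (apply Rmult_le_pos; lra).
    lra. }
  assert (HQ : cn y (cmod k) ^ 2 / 2 <= sn_num_im x y ^ 2).
  { unfold sn_num_im. rewrite (Rpow_mult_distr _ (cn y (cmod k))).
    assert (1 / 2 <= (cn x k * dn x k * sn y (cmod k)) ^ 2)
      by (rewrite <- (pow2_abs (cn x k * dn x k * sn y (cmod k))); nra).
    pose proof (pow2_ge_0 (cn y (cmod k))). nra. }
  assert (HDle : D <= cn y (cmod k) ^ 2 + k ^ 2 * sn x k ^ 2).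
  { unfold D, sn_den. pose proof (pow2_ge_0 (cn y (cmod k))).
    pose proof (pow2_ge_0 (k * sn x k)). rewrite Rpow_mult_distr in *. nra. }
  replace (sn_num_re x y / D * (sn_num_re x y / D * 1) + sn_num_im x y / D * (sn_num_im x y / D * 1))
    with ((sn_num_re x y ^ 2 + sn_num_im x y ^ 2) / D ^ 2) by (field; lra).
  apply Rle_trans with ((D / 2) / D ^ 2); [right; field; lra|].
  unfold Rdiv. apply Rmult_le_compat_r; [apply Rlt_le, Rinv_0_lt_compat; nra|].
  pose proof (pow2_ge_0 (k * sn x k)). rewrite Rpow_mult_distr in *. nra.
Qed.

Lemma snC_unbounded_at_pole (y0 : R) : (y0 = ellK (cmod k) \/ y0 = - ellK (cmod k)) ->
  forall M, exists del, 0 < del /\ forall z, z <> (0, y0) ->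
    Cmod (z - (0, y0))%C < del -> M <= Cmod (snC z k) ^ 2.
Proof.
  intros Hy0 M.
  set (G := fun u v => cn u k * dn u k * sn v (cmod k)).
  assert (HD0 : sn_den 0 y0 = 0).
  { unfold sn_den. rewrite (sn_0 k k_sq_lt_1).
    destruct Hy0 as [-> | ->]; [rewrite (cn_K _ cmod_sq_lt_1) | rewrite (cn_opp_K _ cmod_sq_lt_1)];
      ring. }
  assert (HG0 : Rabs (G 0 y0) = 1).
  { unfold G. rewrite (cn_0 k k_sq_lt_1), (dn_0 k k_sq_lt_1).
    destruct Hy0 as [-> | ->]; [rewrite (sn_K _ cmod_sq_lt_1) | rewrite (sn_opp_K _ cmod_sq_lt_1)].
    - rewrite !Rmult_1_l. apply Rabs_R1.
    - rewrite !Rmult_1_l, Rabs_left by lra. ring. }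
  set (T := 1 / (2 * (Rabs M + 1))).
  assert (HT : 0 < T) by (unfold T; pose proof (Rabs_pos M); apply Rdiv_lt_0_compat; lra).
  destruct (differentiable_continuity_pt sn_den 0 y0
              ltac:(eexists; eexists; apply differentiable_sn_den) (mkposreal _ HT)) as [d1 H1].
  assert (HGc : continuity_2d_pt G 0 y0).
  { apply differentiable_continuity_pt. eexists; eexists. unfold G.
    apply differentiable_pt_lim_mult; [apply differentiable_pt_lim_mult|];
      [apply differentiable_pt_lim_proj1_0 ..| apply differentiable_pt_lim_snd_fun];
      auto using derivable_pt_lim_cn, derivable_pt_lim_dn, derivable_pt_lim_sn,
                 k_sq_lt_1, cmod_sq_lt_1. }
  destruct (HGc (mkposreal (1 / 4) ltac:(lra))) as [d2 H2].
  exists (Rmin (Rmin d1 d2) 2).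
  split; [apply Rmin_pos; [apply Rmin_pos; apply cond_pos | lra]|].
  intros [u v] Hne Hz.
  pose proof (Rmax_Cmod ((u, v) - (0, y0))%C) as Hmax. simpl in Hmax.
  pose proof (Rmax_l (Rabs (u + - 0)) (Rabs (v + - y0))).
  pose proof (Rmax_r (Rabs (u + - 0)) (Rabs (v + - y0))).
  pose proof (Rmin_l (Rmin d1 d2) 2). pose proof (Rmin_r (Rmin d1 d2) 2).
  pose proof (Rmin_l d1 d2). pose proof (Rmin_r d1 d2).
  replace (u + - 0) with (u - 0) in * by ring. replace (v + - y0) with (v - y0) in * by ring.
  specialize (H1 u v ltac:(lra) ltac:(lra)). specialize (H2 u v ltac:(lra) ltac:(lra)).
  simpl in H1, H2. rewrite HD0, Rminus_0_r in H1. rewrite Rminus_0_r in *.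
  assert (HDp : 0 < sn_den u v) by (apply (sn_den_pos_near_pole u v y0); auto; lra).
  rewrite Rabs_right in H1 by lra.
  assert (HG : 3 / 4 <= Rabs (G u v)).
  { pose proof (Rabs_triang_inv (G 0 y0) (G 0 y0 - G u v)).
    replace (G 0 y0 - (G 0 y0 - G u v)) with (G u v) in * by ring.
    rewrite Rabs_minus_sym in H2. lra. }
  eapply Rle_trans; [|apply (Cmod_snC_sq_ge u v HDp HG)].
  apply Rle_trans with (1 / (2 * T)).
  - replace (1 / (2 * T)) with (Rabs M + 1) by (unfold T; field; pose proof (Rabs_pos M); lra).
    pose proof (Rle_abs M). lra.
  - unfold Rdiv. rewrite !Rmult_1_l. apply Rinv_le_contravar; lra.
Qed.

(** * Where [sn^2] is real on the period rectangle *)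

Definition sn2_re (x y : R) : R := sn_re x y ^ 2 - sn_im x y ^ 2.

Lemma inv_k_sq_ge_1 : 1 <= 1 / k ^ 2.
Proof.
  pose proof k_sq_lt_1. assert (0 < k ^ 2) by nra.
  apply Rmult_le_reg_r with (k ^ 2); [lra|]. unfold Rdiv. rewrite Rmult_assoc, Rinv_l; lra.
Qed.

Lemma inv_k_sq_sn_sq_ge (x : R) : sn x k <> 0 -> 1 / k ^ 2 <= 1 / (k ^ 2 * sn x k ^ 2).
Proof.
  intros Hs. pose proof (sn2_cn2 k x). pose proof (pow2_ge_0 (cn x k)).
  assert (0 < sn x k ^ 2) by (apply pow2_gt_0; auto). assert (0 < k ^ 2) by nra.
  unfold Rdiv. rewrite !Rmult_1_l. apply Rinv_le_contravar; [nra|].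
  rewrite <- (Rmult_1_r (k ^ 2)) at 2. apply Rmult_le_compat_l; lra.
Qed.

Section RealSquare.

Variables x y : R.
Hypothesis Hr : in_rect (ellK k) (ellK (cmod k)) (x, y).

Let Hx : - ellK k <= x <= ellK k := proj1 Hr.
Let Hy : - ellK (cmod k) <= y <= ellK (cmod k) := proj2 Hr.

Lemma eq_0_of_sn_eq_0 : sn x k = 0 -> x = 0.
Proof. intros Hs. rewrite <- (arcsn_sn k k_sq_lt_1 x Hx), Hs. apply arcsn_0. Qed.

Lemma eq_0_of_sn_cmod_eq_0 : sn y (cmod k) = 0 -> y = 0.
Proof. intros Hs. rewrite <- (arcsn_sn _ cmod_sq_lt_1 y Hy), Hs. apply arcsn_0. Qed.

Lemma eq_K'_of_cn_cmod_eq_0 : cn y (cmod k) = 0 -> y = ellK (cmod k) \/ y = - ellK (cmod k).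
Proof.
  intros Hc1. pose proof (sn2_cn2 (cmod k) y). rewrite Hc1 in *.
  rewrite <- arcsn_1. apply (sn2_eq_on_rect _ cmod_sq_lt_1 y 1 Hy). lra.
Qed.

Lemma sn_den_eq_0_on_rect : sn_den x y = 0 ->
  x = 0 /\ (y = ellK (cmod k) \/ y = - ellK (cmod k)).
Proof.
  intros HD. destruct (sn_den_eq_0 x y HD) as [Hc1 Hs].
  split; [apply eq_0_of_sn_eq_0 | apply eq_K'_of_cn_cmod_eq_0]; auto.
Qed.

Hypothesis HD : sn_den x y <> 0.

Lemma sn2_real_cases : sn_re x y * sn_im x y = 0 ->
  (cn x k = 0 /\ 1 <= sn2_re x y <= 1 / k ^ 2) \/
  (y = 0 /\ sn2_re x y = sn x k ^ 2) \/
  (cn y (cmod k) = 0 /\ sn x k <> 0 /\ sn2_re x y = 1 / (k ^ 2 * sn x k ^ 2)) \/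
  (x = 0 /\ cn y (cmod k) <> 0 /\
   sn2_re x y = - (sn y (cmod k) ^ 2 / cn y (cmod k) ^ 2)).
Proof.
  intros HUV.
  assert (HDp : 0 < sn_den x y) by (pose proof (sn_den_nonneg x y); lra).
  pose proof (dn_pos k k_sq_lt_1 x) as Hd. pose proof (dn_pos _ cmod_sq_lt_1 y) as Hd1.
  pose proof (dn2 k k_sq_lt_1 x) as Ed. pose proof (dn2 _ cmod_sq_lt_1 y) as Ed1.
  pose proof (sn2_cn2 k x) as Ec. pose proof (sn2_cn2 (cmod k) y) as Ec1.
  pose proof cmod_sq as Ek'. pose proof k_sq_lt_1 as Hk2. assert (Hk0 : 0 < k ^ 2) by nra.
  unfold sn2_re, sn_re, sn_im, sn_num_re, sn_num_im in *.
  assert (HDe : sn_den x y = cn y (cmod k) ^ 2 + k ^ 2 * sn x k ^ 2 * sn y (cmod k) ^ 2)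
    by reflexivity.
  set (D := sn_den x y) in *.
  set (s := sn x k) in *. set (c := cn x k) in *. set (d := dn x k) in *.
  set (s1 := sn y (cmod k)) in *. set (c1 := cn y (cmod k)) in *. set (d1 := dn y (cmod k)) in *.
  destruct (Rmult_integral _ _ HUV) as [HU|HV].
  - assert (Hs0 : s = 0).
    { apply num_eq_0_of_Rdiv_eq_0 in HU; auto.
      destruct (Rmult_integral _ _ HU); lra. }
    assert (Hc1 : c1 <> 0) by (intro h; apply HD; rewrite HDe, h, Hs0; ring).
    right; right; right. split; [apply eq_0_of_sn_eq_0, Hs0|]. split; auto.
    rewrite HU. rewrite Hs0 in *.
    replace D with (c1 ^ 2) by (rewrite HDe; ring).
    replace (0 ^ 2 - (c * d * s1 * c1 / c1 ^ 2) ^ 2)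
      with (- ((c ^ 2 * d ^ 2) * s1 ^ 2 / c1 ^ 2)) by (field; auto).
    replace (c ^ 2 * d ^ 2) with 1 by nra. field. auto.
  - assert (Hcd : c * d * s1 * c1 = 0) by (apply num_eq_0_of_Rdiv_eq_0 in HV; auto).
    rewrite HV. replace (0 ^ 2) with 0 by ring. rewrite Rminus_0_r.
    destruct (Rmult_integral _ _ Hcd) as [Hcds|Hc1];
      [destruct (Rmult_integral _ _ Hcds) as [Hcd'|Hs1]; [destruct (Rmult_integral _ _ Hcd') as [Hc|]|]|].
    + left. split; auto.
      assert (Hs2 : s ^ 2 = 1) by (rewrite Hc in Ec; lra).
      assert (HDd : D = d1 ^ 2) by (rewrite HDe, Ed1, Ek', Hs2; ring_simplify; lra).
      assert (k ^ 2 <= d1 ^ 2 <= 1)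
        by (pose proof (pow2_ge_0 s1); pose proof (pow2_ge_0 c1); split; nra).
      replace ((s * d1 / D) ^ 2) with (s ^ 2 / d1 ^ 2) by (rewrite HDd; field; lra).
      rewrite Hs2.
      split; [apply Rmult_le_reg_r with (d1 ^ 2); [lra|]; unfold Rdiv;
              rewrite Rmult_assoc, Rinv_l; lra|].
      unfold Rdiv. rewrite !Rmult_1_l. apply Rinv_le_contravar; lra.
    + lra.
    + right; left. assert (Hy0 : y = 0) by (apply eq_0_of_sn_cmod_eq_0, Hs1).
      assert (c1 = 1) by (unfold c1; rewrite Hy0; apply cn_0, cmod_sq_lt_1).
      assert (d1 = 1) by (unfold d1; rewrite Hy0; apply dn_0, cmod_sq_lt_1).
      split; auto. rewrite HDe, Hs1, H, H0. field.
    + right; right; left.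
      assert (Hs0 : s <> 0) by (intro h; apply HD; rewrite HDe, h, Hc1; ring).
      assert (Hs1 : s1 ^ 2 = 1) by (rewrite Hc1 in *; lra).
      split; auto. split; auto.
      replace D with (k ^ 2 * s ^ 2) by (rewrite HDe, Hc1, Hs1; ring).
      replace ((s * d1 / (k ^ 2 * s ^ 2)) ^ 2) with (s ^ 2 * d1 ^ 2 / (k ^ 2 * s ^ 2) ^ 2)
        by (field; split; [auto | lra]).
      replace (d1 ^ 2) with (k ^ 2) by (rewrite Ed1, Ek', Hs1; ring).
      field. split; [auto | lra].
Qed.

Hypothesis Hreal : sn_re x y * sn_im x y = 0.

Lemma sn2_real_gt_inv_k_sq : 1 / k ^ 2 < sn2_re x y ->
  (y = ellK (cmod k) \/ y = - ellK (cmod k)) /\ sn x k ^ 2 = 1 / (k ^ 2 * sn2_re x y).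
Proof.
  intros Hgt. pose proof inv_k_sq_ge_1. pose proof (sn2_cn2 k x). pose proof (pow2_ge_0 (cn x k)).
  destruct (sn2_real_cases Hreal) as [[_ B]|[[_ B]|[[Hc1 [Hs B]]|[_ [Hc1 B]]]]].
  - lra.
  - lra.
  - split.
    + apply eq_K'_of_cn_cmod_eq_0, Hc1.
    + assert (0 < k ^ 2) by (pose proof k_sq_lt_1; nra).
      assert (0 < sn x k ^ 2) by (apply pow2_gt_0; auto).
      rewrite B. field. split; [auto | lra].
  - pose proof (pow2_ge_0 (sn y (cmod k))). pose proof (pow2_gt_0 _ Hc1).
    assert (0 <= sn y (cmod k) ^ 2 / cn y (cmod k) ^ 2) by (apply Rdiv_le_0_compat; lra).
    lra.
Qed.

Lemma sn2_real_unit : 0 <= sn2_re x y < 1 -> y = 0 /\ sn x k ^ 2 = sn2_re x y.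
Proof.
  intros Hv. pose proof inv_k_sq_ge_1.
  destruct (sn2_real_cases Hreal) as [[_ B]|[[Hy0 B]|[[_ [Hs B]]|[Hx0 [Hc1 B]]]]].
  - lra.
  - auto.
  - pose proof (inv_k_sq_sn_sq_ge x Hs). lra.
  - pose proof (pow2_ge_0 (sn y (cmod k))). pose proof (pow2_gt_0 _ Hc1).
    assert (Hs1 : sn y (cmod k) ^ 2 = 0).
    { apply (Rmult_eq_reg_r (/ cn y (cmod k) ^ 2)); [|apply Rinv_neq_0_compat; lra].
      assert (0 <= sn y (cmod k) ^ 2 / cn y (cmod k) ^ 2) by (apply Rdiv_le_0_compat; lra).
      unfold Rdiv in *. lra. }
    split; [apply eq_0_of_sn_cmod_eq_0, pow2_eq_0, Hs1|].
    rewrite B, Hs1, Hx0, (sn_0 k k_sq_lt_1). unfold Rdiv. ring.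
Qed.

Lemma sn2_real_nonpos : sn2_re x y <= 0 ->
  x = 0 /\ sn y (cmod k) ^ 2 = - sn2_re x y / (1 - sn2_re x y).
Proof.
  intros Hv. pose proof inv_k_sq_ge_1.
  destruct (sn2_real_cases Hreal) as [[_ B]|[[Hy0 B]|[[_ [Hs B]]|[Hx0 [Hc1 B]]]]].
  - lra.
  - pose proof (pow2_ge_0 (sn x k)).
    split; [apply eq_0_of_sn_eq_0, pow2_eq_0; lra|].
    replace (sn2_re x y) with 0 by lra. rewrite Hy0, (sn_0 _ cmod_sq_lt_1).
    unfold Rdiv. ring.
  - pose proof (inv_k_sq_sn_sq_ge x Hs). lra.
  - split; auto. pose proof (sn2_cn2 (cmod k) y). pose proof (pow2_gt_0 _ Hc1).
    rewrite B.
    replace (1 - - (sn y (cmod k) ^ 2 / cn y (cmod k) ^ 2))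
      with ((sn y (cmod k) ^ 2 + cn y (cmod k) ^ 2) / cn y (cmod k) ^ 2) by (field; auto).
    rewrite H0. field. auto.
Qed.

(* [sn_dx] is the real part of [sn'(z) = cn z dn z]. *)
Lemma sn_dx_neq_0 : sn2_re x y < 1 \/ 1 / k ^ 2 < sn2_re x y -> sn_dx x y <> 0.
Proof.
  intros Hv. pose proof inv_k_sq_ge_1. pose proof (sn2_cn2 k x).
  pose proof (dn_pos k k_sq_lt_1 x). pose proof (dn_pos _ cmod_sq_lt_1 y).
  assert (Hk0 : 0 < k ^ 2) by (pose proof k_sq_lt_1; nra).
  assert (Hdx : forall a, cn x k <> 0 -> a <> 0 ->
            cn x k * dn x k * dn y (cmod k) * a / sn_den x y ^ 2 <> 0).
  { intros a Hc Ha. unfold Rdiv.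
    repeat apply Rmult_integral_contrapositive_currified; try lra; auto.
    apply Rinv_neq_0_compat, pow_nonzero, HD. }
  unfold sn_dx.
  destruct (sn2_real_cases Hreal) as [[_ B]|[[Hy0 B]|[[Hc1 [Hs B]]|[Hx0 [Hc1 B]]]]].
  - lra.
  - assert (Hs1 : sn y (cmod k) = 0) by (rewrite Hy0; apply sn_0, cmod_sq_lt_1).
    assert (Hc1 : cn y (cmod k) = 1) by (rewrite Hy0; apply cn_0, cmod_sq_lt_1).
    rewrite Hs1, Hc1. apply Hdx; [intro h; rewrite h in *; lra | lra].
  - rewrite Hc1. pose proof (sn2_cn2 (cmod k) y). rewrite Hc1 in *.
    pose proof (inv_k_sq_sn_sq_ge x Hs). pose proof (pow2_gt_0 _ Hs).
    apply Hdx.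
    + intro h. rewrite h in *.
      assert (sn x k ^ 2 = 1) by lra. rewrite H6, Rmult_1_r in B. lra.
    + replace (sn y (cmod k) ^ 2) with 1 by lra. nra.
  - assert (Hs : sn x k = 0) by (rewrite Hx0; apply sn_0, k_sq_lt_1).
    rewrite Hs. apply Hdx; [intro h; rewrite Hs, h in *; lra|].
    pose proof (pow2_gt_0 _ Hc1). lra.
Qed.

End RealSquare.

Lemma sn2_re_on_real_axis (x : R) :
  sn_den x 0 <> 0 /\ sn_re x 0 * sn_im x 0 = 0 /\ sn2_re x 0 = sn x k ^ 2.
Proof.
  assert (HD : sn_den x 0 = 1)
    by (unfold sn_den; rewrite (cn_0 _ cmod_sq_lt_1), (sn_0 _ cmod_sq_lt_1); ring).
  assert (HV : sn_im x 0 = 0)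
    by (unfold sn_im, sn_num_im; rewrite (sn_0 _ cmod_sq_lt_1); unfold Rdiv; ring).
  assert (HU : sn_re x 0 = sn x k)
    by (unfold sn_re, sn_num_re; rewrite HD, (dn_0 _ cmod_sq_lt_1); field).
  unfold sn2_re. rewrite HD, HV, HU. split; [lra | split; ring].
Qed.

Lemma sn2_re_on_imaginary_axis (y : R) : cn y (cmod k) <> 0 ->
  sn_den 0 y <> 0 /\ sn_re 0 y * sn_im 0 y = 0 /\
  sn2_re 0 y = - (sn y (cmod k) ^ 2 / cn y (cmod k) ^ 2).
Proof.
  intros Hc.
  assert (HD : sn_den 0 y = cn y (cmod k) ^ 2) by (unfold sn_den; rewrite (sn_0 k k_sq_lt_1); ring).
  assert (HU : sn_re 0 y = 0) by (unfold sn_re, sn_num_re; rewrite (sn_0 k k_sq_lt_1); unfold Rdiv; ring).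
  assert (HV : sn_im 0 y = sn y (cmod k) / cn y (cmod k)).
  { unfold sn_im, sn_num_im. rewrite HD, (cn_0 k k_sq_lt_1), (dn_0 k k_sq_lt_1). field. auto. }
  unfold sn2_re. rewrite HD, HU, HV. split; [apply pow_nonzero; auto|]. split; [ring|]. field. auto.
Qed.

Lemma sn2_re_on_pole_line (x y : R) : cn y (cmod k) = 0 -> sn x k <> 0 ->
  sn_den x y <> 0 /\ sn_re x y * sn_im x y = 0 /\ sn2_re x y = 1 / (k ^ 2 * sn x k ^ 2).
Proof.
  intros Hc1 Hs. pose proof (sn2_cn2 (cmod k) y) as Hs1. rewrite Hc1 in Hs1.
  assert (Hk0 : 0 < k ^ 2) by nra.
  assert (HD : sn_den x y = k ^ 2 * sn x k ^ 2) by (unfold sn_den; rewrite Hc1; nra).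
  assert (HDn : k ^ 2 * sn x k ^ 2 <> 0)
    by (apply Rmult_integral_contrapositive; split; [lra | apply pow_nonzero; auto]).
  assert (HV : sn_im x y = 0) by (unfold sn_im, sn_num_im; rewrite Hc1; unfold Rdiv; ring).
  unfold sn2_re, sn_re, sn_num_re. rewrite HD, HV.
  split; [auto | split; [ring|]].
  replace ((sn x k * dn y (cmod k) / (k ^ 2 * sn x k ^ 2)) ^ 2 - 0 ^ 2)
    with (sn x k ^ 2 * dn y (cmod k) ^ 2 / (k ^ 2 * sn x k ^ 2) ^ 2)
    by (field; repeat split; auto; lra).
  rewrite (dn2 _ cmod_sq_lt_1), cmod_sq. replace (sn y (cmod k) ^ 2) with 1 by lra.
  field. repeat split; auto; lra.
Qed.

End ComplexSn.

(** * Poles and zeros of [phi] *)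

Lemma Cmult_self_eq_RtoC (U V r : R) :
  ((U, V) * (U, V))%C = RtoC r <-> U * V = 0 /\ U ^ 2 - V ^ 2 = r.
Proof.
  unfold Cmult, RtoC. simpl. split.
  - intros H. injection H. intros. split; nra.
  - intros [H1 H2]. f_equal; nra.
Qed.

Lemma lat_eq_of_shift (K K' x y x' y' : R) (m n : Z) :
  x - x' = 2 * IZR m * K -> y - y' = 2 * IZR n * K' -> lat_eq K K' (x, y) (x', y').
Proof. intros h1 h2. exists m, n. unfold Cminus, Cplus, Copp. simpl. f_equal; lra. Qed.

Lemma lat_eq_refl (K K' : R) (z : C) : lat_eq K K' z z.
Proof. destruct z. apply (lat_eq_of_shift _ _ _ _ _ _ 0 0); ring. Qed.

Lemma not_IZR_mult (m : Z) (K a : R) : 0 < a < K -> a <> IZR m * K.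
Proof.
  intros Ha E. destruct (Z_lt_le_dec m 1) as [h|h].
  - assert (IZR m <= 0) by (apply IZR_le; lia). nra.
  - assert (1 <= IZR m) by (apply IZR_le; lia). nra.
Qed.

Lemma not_lat_eq_opp_fst (K K' a b : R) : 0 < a < K -> ~ lat_eq K K' (a, b) (- a, - b).
Proof.
  intros Ha [m [n E]]. apply (f_equal fst) in E. unfold Cminus, Cplus, Copp in E. simpl in E.
  apply (not_IZR_mult m K a Ha). lra.
Qed.

Lemma not_lat_eq_opp_snd (K K' a b : R) : 0 < b < K' -> ~ lat_eq K K' (a, b) (- a, - b).
Proof.
  intros Hb [m [n E]]. apply (f_equal snd) in E. unfold Cminus, Cplus, Copp in E. simpl in E.
  apply (not_IZR_mult n K' b Hb). lra.
Qed.

Lemma sqrt_in_unit (r : R) : 0 < r < 1 -> 0 < sqrt r < 1 /\ sqrt r ^ 2 = r.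
Proof.
  intros Hr. split; [split|].
  - apply sqrt_lt_R0. lra.
  - rewrite <- sqrt_1. apply sqrt_lt_1_alt. lra.
  - apply pow2_sqrt. lra.
Qed.

Section PhiPolesZeros.

Variables z1 z2 z3 : R.
Hypothesis h3 : 0 < z3.
Hypothesis h32 : z3 < z2.
Hypothesis h21 : z2 < z1.

Definition modulus : R := sqrt ((z1 ^ 2 - z2 ^ 2) / (z1 ^ 2 - z3 ^ 2)).
Definition phiN : R := 2 * (z1 + z3) * (z2 + z3).
Definition phiA : R := z1 + z3.
Definition phiC : R := z1 - z2.
Definition phiS : R := z1 + z2 + z3.
Definition phi : C -> C := phi_of phiN phiA phiC phiS (fun z => snC z modulus).

(* [phi] has a pole where [sn^2 = pole_value] and a zero where [sn^2 = zero_value]. *)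
Definition pole_value : R := phiA / phiC.
Definition zero_value : R := (phiS * phiA - phiN) / (phiS * phiC).

Local Notation K := (ellK modulus).
Local Notation K' := (ellK (cmod modulus)).

Lemma phi_consts_pos : 0 < phiN /\ 0 < phiA /\ 0 < phiC /\ 0 < phiS.
Proof. unfold phiN, phiA, phiC, phiS. repeat split; nra. Qed.

Lemma modulus_sq : modulus ^ 2 = (z1 ^ 2 - z2 ^ 2) / (z1 ^ 2 - z3 ^ 2).
Proof. apply pow2_sqrt, Rdiv_le_0_compat; nra. Qed.

Lemma modulus_bounds : 0 < modulus < 1.
Proof.
  assert (H : 0 < (z1 ^ 2 - z2 ^ 2) / (z1 ^ 2 - z3 ^ 2) < 1).
  { split; [apply Rdiv_lt_0_compat; nra|].
    apply Rmult_lt_reg_r with (z1 ^ 2 - z3 ^ 2); [nra|].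
    unfold Rdiv. rewrite Rmult_assoc, Rinv_l by nra. nra. }
  exact (proj1 (sqrt_in_unit _ H)).
Qed.

Let Hk := modulus_bounds.
Let Hk2 := k_sq_lt_1 modulus Hk.
Let Hk'2 := cmod_sq_lt_1 modulus Hk.

Lemma pole_value_eq : pole_value = 1 / (modulus ^ 2 * ((z1 - z3) / (z1 + z2))).
Proof. rewrite modulus_sq. unfold pole_value, phiA, phiC. field. repeat split; nra. Qed.

Lemma pole_value_gt : 1 / modulus ^ 2 < pole_value.
Proof.
  rewrite pole_value_eq.
  assert (0 < modulus ^ 2) by nra.
  assert (0 < (z1 - z3) / (z1 + z2) < 1).
  { split; [apply Rdiv_lt_0_compat; lra|].
    apply Rmult_lt_reg_r with (z1 + z2); [lra|]. unfold Rdiv. rewrite Rmult_assoc, Rinv_l; lra. }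
  set (r := (z1 - z3) / (z1 + z2)) in *.
  unfold Rdiv. rewrite !Rmult_1_l.
  apply Rinv_lt_contravar; [apply Rmult_lt_0_compat; [apply Rmult_lt_0_compat|]; lra|].
  assert (0 < modulus ^ 2 * (1 - r)) by (apply Rmult_lt_0_compat; lra).
  lra.
Qed.

Lemma zero_value_eq :
  zero_value = (z1 + z3) * (z1 - z2 - z3) / ((z1 - z2) * (z1 + z2 + z3)).
Proof. unfold zero_value, phiS, phiA, phiN, phiC. field. split; nra. Qed.

Lemma zero_value_lt_1 : zero_value < 1.
Proof.
  unfold zero_value, phiS, phiA, phiN, phiC.
  apply Rmult_lt_reg_r with ((z1 + z2 + z3) * (z1 - z2)); [nra|].
  unfold Rdiv. rewrite Rmult_assoc, Rinv_l by nra. nra.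
Qed.

Lemma zero_value_sign : 0 < zero_value <-> z2 + z3 < z1.
Proof.
  rewrite zero_value_eq. assert (0 < (z1 - z2) * (z1 + z2 + z3)) by nra.
  split; intros H0.
  - apply Rnot_le_lt. intro h. apply (Rlt_not_le _ _ H0).
    apply Rmult_le_0_r; [nra | left; apply Rinv_0_lt_compat; lra].
  - apply Rdiv_lt_0_compat; nra.
Qed.

Lemma zero_value_neg : z1 < z2 + z3 -> zero_value < 0.
Proof.
  intros H. rewrite zero_value_eq. unfold Rdiv.
  apply Rmult_neg_pos; [nra | apply Rinv_0_lt_compat; nra].
Qed.

Lemma zero_value_0 : z1 = z2 + z3 -> zero_value = 0.
Proof. intros H. rewrite zero_value_eq. replace (z1 - z2 - z3) with 0 by lra. unfold Rdiv. ring. Qed.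

Definition phi_den (z : C) : C := (phiA - phiC * (snC z modulus * snC z modulus))%C.

Lemma phi_den_eq_0_iff (x y : R) : sn_den modulus x y <> 0 ->
  phi_den (x, y) = 0 <->
  sn_re modulus x y * sn_im modulus x y = 0 /\ sn2_re modulus x y = pole_value.
Proof.
  intros HD. destruct phi_consts_pos as [_ [HA [HC _]]].
  unfold phi_den, sn2_re. rewrite (snC_eq _ _ _ HD), <- Cmult_self_eq_RtoC.
  unfold pole_value. rewrite RtoC_div by lra.
  split; intros H.
  - apply Ceq_minus in H. rewrite H. field. apply RtoC_neq_0. lra.
  - rewrite H. field. apply RtoC_neq_0. lra.
Qed.

Lemma phi_zero_iff (x y : R) : sn_den modulus x y <> 0 ->
  (phi_den (x, y) <> 0 /\ (phiN / phi_den (x, y) - phiS)%C = 0) <->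
  sn_re modulus x y * sn_im modulus x y = 0 /\ sn2_re modulus x y = zero_value.
Proof.
  intros HD. destruct phi_consts_pos as [HN [HA [HC HS]]].
  unfold phi_den, sn2_re. rewrite (snC_eq _ _ _ HD), <- Cmult_self_eq_RtoC.
  set (w2 := ((sn_re modulus x y, sn_im modulus x y) * (sn_re modulus x y, sn_im modulus x y))%C).
  assert (HSC : RtoC (phiS * phiC) <> 0) by (apply RtoC_neq_0; nra).
  unfold zero_value. rewrite RtoC_div by nra. rewrite RtoC_minus, !RtoC_mult.
  split.
  - intros [Hq Hp]. apply Ceq_minus in Hp.
    assert (E : RtoC phiN = (phiS * (phiA - phiC * w2))%C) by (rewrite <- Hp; field; auto).
    rewrite E. field. split; apply RtoC_neq_0; lra.
  - intros Hw. rewrite Hw.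
    assert (Hq : (phiA - phiC * ((phiS * phiA - phiN) / (phiS * phiC)))%C = RtoC (phiN / phiS)).
    { rewrite RtoC_div by lra. field. split; apply RtoC_neq_0; lra. }
    rewrite Hq. split.
    + apply RtoC_neq_0, Rgt_not_eq, Rdiv_lt_0_compat; lra.
    + rewrite <- RtoC_div, <- RtoC_minus by (apply Rgt_not_eq, Rdiv_lt_0_compat; lra).
      f_equal. field. lra.
Qed.

Lemma Clim_phi_at_sn_pole (x y : R) : in_rect K K' (x, y) -> sn_den modulus x y = 0 ->
  Clim phi (x, y) (RtoC (- phiS)).
Proof.
  intros Hr HD. destruct (sn_den_eq_0_on_rect _ Hk x y Hr HD) as [-> Hy].
  destruct phi_consts_pos as [_ [HA [HC _]]].
  apply Clim_phi_of_unbounded; auto. apply snC_unbounded_at_pole; auto.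
Qed.

Lemma Clim_phi_regular (x y : R) : sn_den modulus x y <> 0 -> phi_den (x, y) <> 0 ->
  Clim phi (x, y) (phiN / phi_den (x, y) - phiS)%C.
Proof. intros HD Hq. apply Clim_phi_of; auto. apply Clim_snC; auto. Qed.

Lemma snC_sq_real (x y : R) (r : R) : sn_den modulus x y <> 0 ->
  sn_re modulus x y * sn_im modulus x y = 0 -> sn2_re modulus x y = r ->
  (snC (x, y) modulus * snC (x, y) modulus)%C = RtoC r.
Proof. intros HD H1 H2. rewrite snC_eq by auto. apply Cmult_self_eq_RtoC. auto. Qed.

Lemma order_phi_at_pole (x y : R) : in_rect K K' (x, y) -> sn_den modulus x y <> 0 ->
  phi_den (x, y) = 0 -> order_at phi (x, y) (-1).
Proof.
  intros Hr HD Hq. destruct phi_consts_pos as [HN [HA [HC HS]]].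
  pose proof pole_value_gt.
  destruct (proj1 (phi_den_eq_0_iff x y HD) Hq) as [HUV Hv].
  apply (order_phi_of_pole phiN phiA phiC phiS ltac:(lra) _ _ _ (is_Cderiv_snC _ Hk x y HD)).
  - intro h. injection h. intros _. apply (sn_dx_neq_0 _ Hk x y Hr HD HUV). lra.
  - intro h. pose proof (snC_sq_real x y _ HD HUV Hv) as E. rewrite h, Cmult_0_l in E.
    injection E. unfold pole_value. intros E'. apply (Rlt_irrefl 0).
    rewrite E' at 2. apply Rdiv_lt_0_compat; lra.
  - exact Hq.
  - lra.
Qed.

Lemma order_phi_at_zero (x y : R) : in_rect K K' (x, y) -> sn_den modulus x y <> 0 ->
  phi_den (x, y) <> 0 -> (phiN / phi_den (x, y) - phiS)%C = 0 ->
  order_at phi (x, y) (if Req_EM_T zero_value 0 then 2 else 1).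
Proof.
  intros Hr HD Hq Hp. destruct phi_consts_pos as [HN [HA [HC HS]]].
  destruct (proj1 (phi_zero_iff x y HD) (conj Hq Hp)) as [HUV Hv].
  pose proof (snC_sq_real x y _ HD HUV Hv) as Hw2.
  assert (Hdx : sn_dx modulus x y <> 0)
    by (apply (sn_dx_neq_0 _ Hk x y Hr HD HUV); left; rewrite Hv; apply zero_value_lt_1).
  assert (Hl : ((sn_dx modulus x y, - sn_dy modulus x y) : C) <> 0)
    by (intro h; injection h; intros; auto).
  destruct (Req_EM_T zero_value 0) as [H0|H0].
  - apply (order_phi_of_double_zero phiN phiA phiC phiS ltac:(lra) _ _ _
             (is_Cderiv_snC _ Hk x y HD) Hl); try lra.
    + rewrite H0 in Hw2. rewrite snC_eq in * by auto.
      apply Cmult_self_eq_RtoC in Hw2. destruct Hw2 as [H1 H2].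
      destruct (Rmult_integral _ _ H1) as [h|h]; rewrite h in *;
        [rewrite (pow2_eq_0 (sn_im modulus x y)) | rewrite (pow2_eq_0 (sn_re modulus x y))];
        auto; lra.
    + unfold zero_value in H0. apply num_eq_0_of_Rdiv_eq_0 in H0; [lra | nra].
  - apply (order_phi_of_simple_zero phiN phiA phiC phiS ltac:(lra) _ _ _
             (is_Cderiv_snC _ Hk x y HD) Hl); auto; try lra.
    + intro h. rewrite h, Cmult_0_l in Hw2. injection Hw2. auto.
    + apply Ceq_minus in Hp. rewrite <- Hp. fold (phi_den (x, y)). field. auto.
Qed.

Lemma phi_has_order (z : C) : in_rect K K' z -> exists m : Z, order_at phi z m.
Proof.
  intros Hr. destruct z as [x y].
  destruct (Req_dec (sn_den modulus x y) 0) as [HD|HD].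
  - exists 0%Z. eapply order_0_of_Clim; [apply Clim_phi_at_sn_pole; auto|].
    destruct phi_consts_pos as [_ [_ [_ HS]]]. apply RtoC_neq_0. lra.
  - destruct (Ceq_dec (phi_den (x, y)) 0) as [Hq|Hq]; [exists (-1)%Z; apply order_phi_at_pole; auto|].
    destruct (Ceq_dec (phiN / phi_den (x, y) - phiS)%C 0) as [Hp|Hp].
    + eexists. apply order_phi_at_zero; auto.
    + exists 0%Z. eapply order_0_of_Clim; [apply Clim_phi_regular|]; auto.
Qed.

Lemma phi_order_neg (z : C) (m : Z) : in_rect K K' z -> order_at phi z m -> (m < 0)%Z ->
  sn_den modulus (fst z) (snd z) <> 0 /\ phi_den z = 0.
Proof.
  intros Hr Ho Hm. destruct z as [x y]. simpl.
  destruct (Req_dec (sn_den modulus x y) 0) as [HD|HD].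
  - exfalso. eapply order_neg_no_Clim; eauto. apply Clim_phi_at_sn_pole; auto.
  - split; auto. destruct (Ceq_dec (phi_den (x, y)) 0) as [Hq|Hq]; auto.
    exfalso. eapply order_neg_no_Clim; eauto. apply Clim_phi_regular; auto.
Qed.

Lemma phi_order_pos (z : C) (m : Z) : in_rect K K' z -> order_at phi z m -> (0 < m)%Z ->
  sn_den modulus (fst z) (snd z) <> 0 /\
  sn_re modulus (fst z) (snd z) * sn_im modulus (fst z) (snd z) = 0 /\
  sn2_re modulus (fst z) (snd z) = zero_value.
Proof.
  intros Hr Ho Hm. destruct z as [x y]. simpl.
  pose proof (Clim_0_of_order_pos _ _ _ Ho Hm) as H0.
  destruct phi_consts_pos as [_ [_ [_ HS]]].
  destruct (Req_dec (sn_den modulus x y) 0) as [HD|HD].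
  - exfalso. apply (RtoC_neq_0 (- phiS)); [lra|].
    apply (Clim_unique phi (x, y)); [apply Clim_phi_at_sn_pole | exact H0]; auto.
  - destruct (Ceq_dec (phi_den (x, y)) 0) as [Hq|Hq].
    + exfalso. eapply order_neg_no_Clim; [apply order_phi_at_pole; eauto | lia | exact H0].
    + split; auto. apply phi_zero_iff; auto. split; auto.
      apply (Clim_unique phi (x, y)); [apply Clim_phi_regular | exact H0]; auto.
Qed.

Lemma order_phi_on_pole_line (x y : R) : in_rect K K' (x, y) -> cn y (cmod modulus) = 0 ->
  sn x modulus ^ 2 = (z1 - z3) / (z1 + z2) -> order_at phi (x, y) (-1).
Proof.
  intros Hr Hc1 Hs.
  assert (Hs0 : sn x modulus <> 0)
    by (intro h; rewrite h in Hs; pose proof (Rdiv_lt_0_compat (z1 - z3) (z1 + z2)); nra).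
  destruct (sn2_re_on_pole_line _ Hk x y Hc1 Hs0) as [HD [HUV Hv]].
  apply order_phi_at_pole; auto. apply phi_den_eq_0_iff; auto.
  rewrite Hv, Hs, pole_value_eq. auto.
Qed.

Lemma order_phi_simple_zero (x y : R) : in_rect K K' (x, y) -> zero_value <> 0 ->
  sn_den modulus x y <> 0 -> sn_re modulus x y * sn_im modulus x y = 0 ->
  sn2_re modulus x y = zero_value -> order_at phi (x, y) 1.
Proof.
  intros Hr H0 HD HUV Hv. destruct (proj2 (phi_zero_iff x y HD) (conj HUV Hv)) as [Hq Hp].
  pose proof (order_phi_at_zero x y Hr HD Hq Hp).
  destruct (Req_EM_T zero_value 0); [contradiction | auto].
Qed.

Lemma phi_poles : exists alpha : R,
  0 < alpha < K /\ sn alpha modulus = sqrt ((z1 - z3) / (z1 + z2)) /\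
  let p : C := (alpha, K') in
  order_at phi p (-1) /\ order_at phi (Copp p) (-1) /\ ~ lat_eq K K' p (Copp p) /\
  (forall z m, in_rect K K' z -> order_at phi z m -> (m < 0)%Z ->
     lat_eq K K' z p \/ lat_eq K K' z (Copp p)).
Proof.
  assert (Hr : 0 < (z1 - z3) / (z1 + z2) < 1).
  { split; [apply Rdiv_lt_0_compat; lra|].
    apply Rmult_lt_reg_r with (z1 + z2); [lra|]. unfold Rdiv. rewrite Rmult_assoc, Rinv_l; lra. }
  destruct (sqrt_in_unit _ Hr) as [Hv Hv2].
  set (v := sqrt ((z1 - z3) / (z1 + z2))) in *.
  pose proof (arcsn_bounds _ Hk2 v Hv) as Ha.
  pose proof (ellK_pos _ Hk'2).
  assert (Hsa : sn (arcsn modulus v) modulus = v) by (apply sn_arcsn; auto; lra).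
  exists (arcsn modulus v). split; auto. split; auto. intros p. unfold p.
  change (Copp (arcsn modulus v, K')) with ((- arcsn modulus v, - K') : C).
  split; [|split; [|split]].
  - apply order_phi_on_pole_line; [split; simpl; lra | apply cn_K, Hk'2 | ].
    rewrite Hsa. auto.
  - apply order_phi_on_pole_line; [split; simpl; lra | apply cn_opp_K, Hk'2 | ].
    rewrite <- arcsn_opp, sn_arcsn by (auto; lra). rewrite <- Hv2. ring.
  - apply not_lat_eq_opp_fst. auto.
  - intros [x y] m Hrz Ho Hm.
    destruct (phi_order_neg _ _ Hrz Ho Hm) as [HD Hq]. simpl in HD.
    destruct (proj1 (phi_den_eq_0_iff x y HD) Hq) as [HUV Hval].
    destruct (sn2_real_gt_inv_k_sq _ Hk x y Hrz HD HUV) as [Hy Hs];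
      [rewrite Hval; apply pole_value_gt|].
    rewrite Hval, pole_value_eq, <- Hv2 in Hs.
    replace (1 / (modulus ^ 2 * (1 / (modulus ^ 2 * v ^ 2)))) with (v ^ 2) in Hs
      by (field; split; nra).
    destruct (sn2_eq_on_rect _ Hk2 x v (proj1 Hrz) Hs) as [-> | ->];
      destruct Hy as [-> | ->].
    + left. apply lat_eq_refl.
    + left. apply (lat_eq_of_shift _ _ _ _ _ _ 0 (-1)); ring.
    + right. apply (lat_eq_of_shift _ _ _ _ _ _ 0 1); ring.
    + right. apply lat_eq_refl.
Qed.

Lemma phi_zeros_real : z1 > z2 + z3 -> exists beta : R,
  0 < beta < K /\
  sn beta modulus = sqrt ((z1 + z3) * (z1 - z2 - z3) / ((z1 - z2) * (z1 + z2 + z3))) /\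
  let b : C := RtoC beta in
  order_at phi b 1 /\ order_at phi (Copp b) 1 /\ ~ lat_eq K K' b (Copp b) /\
  (forall z m, in_rect K K' z -> order_at phi z m -> (0 < m)%Z ->
     lat_eq K K' z b \/ lat_eq K K' z (Copp b)).
Proof.
  intros Hgt. rewrite <- zero_value_eq.
  assert (Hr : 0 < zero_value < 1) by (split; [apply zero_value_sign | apply zero_value_lt_1]; lra).
  destruct (sqrt_in_unit _ Hr) as [Hv Hv2].
  set (v := sqrt zero_value) in *.
  pose proof (arcsn_bounds _ Hk2 v Hv) as Hb. pose proof (ellK_pos _ Hk'2).
  assert (Hzero : forall x, - K <= x <= K -> sn x modulus ^ 2 = v ^ 2 -> order_at phi (x, 0) 1).
  { intros x Hx Hs. destruct (sn2_re_on_real_axis _ Hk x) as [HD [HUV Hval]].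
    apply order_phi_simple_zero; auto; [split; simpl; lra | lra | congruence]. }
  exists (arcsn modulus v). split; auto. split; [apply sn_arcsn; auto; lra|].
  intros b. unfold b. change (Copp (RtoC (arcsn modulus v))) with ((- arcsn modulus v, - 0) : C).
  split; [|split; [|split]].
  - apply Hzero; [lra|]. rewrite sn_arcsn; auto; lra.
  - rewrite Ropp_0. apply Hzero; [lra|]. rewrite <- arcsn_opp, sn_arcsn by (auto; lra). ring.
  - apply not_lat_eq_opp_fst. auto.
  - rewrite Ropp_0. intros [x y] m Hrz Ho Hm.
    destruct (phi_order_pos _ _ Hrz Ho Hm) as [HD [HUV Hval]]. simpl in *.
    destruct (sn2_real_unit _ Hk x y Hrz HD HUV) as [-> Hs]; [lra|].
    rewrite Hval, <- Hv2 in Hs.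
    destruct (sn2_eq_on_rect _ Hk2 x v (proj1 Hrz) Hs) as [-> | ->].
    + left. apply lat_eq_refl.
    + right. apply lat_eq_refl.
Qed.

Lemma phi_zeros_imaginary : z1 < z2 + z3 -> exists t : R,
  0 < t < K' /\
  sn t (cmod modulus) = sqrt ((z1 + z3) * (z2 + z3 - z1) / ((z2 + z3) * (z1 - z2 + z3))) /\
  let b : C := (0, t) in
  order_at phi b 1 /\ order_at phi (Copp b) 1 /\ ~ lat_eq K K' b (Copp b) /\
  (forall z m, in_rect K K' z -> order_at phi z m -> (0 < m)%Z ->
     lat_eq K K' z b \/ lat_eq K K' z (Copp b)).
Proof.
  intros Hlt. pose proof (zero_value_neg Hlt) as Hneg.
  replace ((z1 + z3) * (z2 + z3 - z1) / ((z2 + z3) * (z1 - z2 + z3)))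
    with (- zero_value / (1 - zero_value)) by (rewrite zero_value_eq; field; repeat split; nra).
  assert (Hr : 0 < - zero_value / (1 - zero_value) < 1).
  { split; [apply Rdiv_lt_0_compat; lra|].
    apply Rmult_lt_reg_r with (1 - zero_value); [lra|].
    unfold Rdiv. rewrite Rmult_assoc, Rinv_l; lra. }
  destruct (sqrt_in_unit _ Hr) as [Hv Hv2].
  set (v := sqrt (- zero_value / (1 - zero_value))) in *.
  pose proof (arcsn_bounds _ Hk'2 v Hv) as Hb. pose proof (ellK_pos _ Hk2).
  assert (Hzero : forall y, - K' <= y <= K' -> sn y (cmod modulus) ^ 2 = v ^ 2 ->
                    order_at phi (0, y) 1).
  { intros y Hy Hs. pose proof (sn2_cn2 (cmod modulus) y).
    assert (Hc1 : cn y (cmod modulus) <> 0) by (intro h; rewrite h in *; lra).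
    destruct (sn2_re_on_imaginary_axis _ Hk y Hc1) as [HD [HUV Hval]].
    apply order_phi_simple_zero; auto; [split; simpl; lra | lra |].
    rewrite Hval. replace (cn y (cmod modulus) ^ 2) with (1 - v ^ 2) by lra.
    rewrite Hs, Hv2. field. lra. }
  exists (arcsn (cmod modulus) v). split; auto. split; [apply sn_arcsn; auto; lra|].
  intros b. unfold b.
  change (Copp (0, arcsn (cmod modulus) v)) with ((- 0, - arcsn (cmod modulus) v) : C).
  split; [|split; [|split]].
  - apply Hzero; [lra|]. rewrite sn_arcsn; auto; lra.
  - rewrite Ropp_0. apply Hzero; [lra|]. rewrite <- arcsn_opp, sn_arcsn by (auto; lra). ring.
  - apply not_lat_eq_opp_snd. auto.
  - rewrite Ropp_0. intros [x y] m Hrz Ho Hm.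
    destruct (phi_order_pos _ _ Hrz Ho Hm) as [HD [HUV Hval]]. simpl in *.
    destruct (sn2_real_nonpos _ Hk x y Hrz HD HUV) as [-> Hs]; [lra|].
    rewrite Hval, <- Hv2 in Hs.
    destruct (sn2_eq_on_rect _ Hk'2 y v (proj2 Hrz) Hs) as [-> | ->].
    + left. apply lat_eq_refl.
    + right. apply lat_eq_refl.
Qed.

Lemma phi_zero_double : z1 = z2 + z3 ->
  order_at phi (RtoC 0) 2 /\
  (forall z m, in_rect K K' z -> order_at phi z m -> (0 < m)%Z -> lat_eq K K' z (RtoC 0)).
Proof.
  intros Heq. pose proof (zero_value_0 Heq) as H0.
  pose proof (ellK_pos _ Hk2). pose proof (ellK_pos _ Hk'2).
  split.
  - destruct (sn2_re_on_real_axis _ Hk 0) as [HD [HUV Hval]].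
    rewrite (sn_0 _ Hk2) in Hval.
    assert (Hv : sn2_re modulus 0 0 = zero_value) by (rewrite Hval, H0; ring).
    destruct (proj2 (phi_zero_iff 0 0 HD) (conj HUV Hv)) as [Hq Hp].
    pose proof (order_phi_at_zero 0 0 ltac:(split; simpl; lra) HD Hq Hp).
    destruct (Req_EM_T zero_value 0); [auto | contradiction].
  - intros [x y] m Hrz Ho Hm.
    destruct (phi_order_pos _ _ Hrz Ho Hm) as [HD [HUV Hval]]. simpl in *.
    destruct (sn2_real_unit _ Hk x y Hrz HD HUV) as [-> _]; [lra|].
    destruct (sn2_real_nonpos _ Hk x 0 Hrz HD HUV) as [-> _]; [lra|].
    apply lat_eq_refl.
Qed.

End PhiPolesZeros.

Theorem lemma5 (z1 z2 z3 : R) (h3 : 0 < z3) (h32 : z3 < z2) (h21 : z2 < z1) :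
  let k := sqrt ((z1 ^ 2 - z2 ^ 2) / (z1 ^ 2 - z3 ^ 2)) in
  let k' := cmod k in
  let K := ellK k in
  let K' := ellK k' in
  let phi : C -> C := fun z =>
    Cminus
      (Cdiv (RtoC (2 * (z1 + z3) * (z2 + z3)))
            (Cminus (RtoC (z1 + z3))
                    (Cmult (RtoC (z1 - z2)) (Cmult (snC z k) (snC z k)))))
      (RtoC (z1 + z2 + z3)) in
  (* phi is meromorphic: it has a (finite) order at every point *)
  (forall z, in_rect K K' z -> exists m : Z, order_at phi z m) /\
  (* poles: exactly two simple poles at +-(iK' + alpha) *)
  (exists alpha : R,
     0 < alpha < K /\ sn alpha k = sqrt ((z1 - z3) / (z1 + z2)) /\
     let p : C := (alpha, K') in
     order_at phi p (-1) /\ order_at phi (Copp p) (-1) /\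
     ~ lat_eq K K' p (Copp p) /\
     (forall z m, in_rect K K' z -> order_at phi z m -> (m < 0)%Z ->
        lat_eq K K' z p \/ lat_eq K K' z (Copp p))) /\
  (* zeros, case z1 > z2 + z3: real beta *)
  (z1 > z2 + z3 ->
   exists beta : R,
     0 < beta < K /\
     sn beta k = sqrt ((z1 + z3) * (z1 - z2 - z3) /
                       ((z1 - z2) * (z1 + z2 + z3))) /\
     let b : C := RtoC beta in
     order_at phi b 1 /\ order_at phi (Copp b) 1 /\
     ~ lat_eq K K' b (Copp b) /\
     (forall z m, in_rect K K' z -> order_at phi z m -> (0 < m)%Z ->
        lat_eq K K' z b \/ lat_eq K K' z (Copp b))) /\
  (* zeros, case z1 < z2 + z3: purely imaginary beta = i*t, sn(-i beta,k') = sn(t,k') *)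
  (z1 < z2 + z3 ->
   exists t : R,
     0 < t < K' /\
     sn t k' = sqrt ((z1 + z3) * (z2 + z3 - z1) /
                     ((z2 + z3) * (z1 - z2 + z3))) /\
     let b : C := (0, t) in
     order_at phi b 1 /\ order_at phi (Copp b) 1 /\
     ~ lat_eq K K' b (Copp b) /\
     (forall z m, in_rect K K' z -> order_at phi z m -> (0 < m)%Z ->
        lat_eq K K' z b \/ lat_eq K K' z (Copp b))) /\
  (* zeros, case z1 = z2 + z3: a single double zero at beta = 0 *)
  (z1 = z2 + z3 ->
     order_at phi (RtoC 0) 2 /\
     (forall z m, in_rect K K' z -> order_at phi z m -> (0 < m)%Z ->
        lat_eq K K' z (RtoC 0))).
Proof.
  intros k k' K K' phi.
  split; [exact (phi_has_order z1 z2 z3 h3 h32 h21)|].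
  split; [exact (phi_poles z1 z2 z3 h3 h32 h21)|].
  split; [exact (phi_zeros_real z1 z2 z3 h3 h32 h21)|].
  split; [exact (phi_zeros_imaginary z1 z2 z3 h3 h32 h21)|].
  exact (phi_zero_double z1 z2 z3 h3 h32 h21).
Qed.
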